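(* Under the setting below, assume $G$ is convex, the sampling in Algorithm BC is essentially cyclic (there is $T\ge1$ such that every $i\in[N]$ belongs to at least one of $I^{k+1},\dots,I^{k+T}$ for every $k\ge0$), $\Phi$ is coercive, and $\Phi$ has the KL property with exponent $\theta\in(0,1)$ (e.g. when all $f_i$ and $G$ are semialgebraic). Then the sequences $(\bm x^k)$ and $(\bm z^k)$ converge to the same point $\bm x^\star$, which satisfies $0\in\hat\partial\Phi(\bm x^\star)$. If moreover $\theta\le\frac12$, then $(\|\bm z^k-\bm x^k\|)$, $(\bm x^k)$ and $(\bm z^k)$ converge R-linearly.
   Context: Setting: $N\ge1$, $n=\sum_{i=1}^N n_i$, $\bm x=(x_1,\dots,x_N)$ with $x_i\in\mathbb R^{n_i}$; $\Phi=F+G$ with $F(\bm x)=\frac1N\sum_i f_i(x_i)$, each $f_i:\mathbb R^{n_i}\to\mathbb R$ differentiable with $L_{f_i}$-Lipschitz gradient, $G:\mathbb R^n\to\mathbb R\cup\{+\infty\}$ proper lsc, $\arg\min\Phi\ne\emptyset$. $\gamma_i\in(0,N/L_{f_i})$, $\Gamma=\operatorname{blockdiag}(\gamma_1I_{n_1},\dots,\gamma_NI_{n_N})$, $\|x\|_V^2=\langle x,Vx\rangle$, $\operatorname{prox}_G^{V}(u)=\arg\min_w\{G(w)+\frac12\|w-u\|_V^2\}$, $\mathbf T(\bm x)=\operatorname{prox}_G^{\Gamma^{-1}}(\bm x-\Gamma\nabla F(\bm x))$. Algorithm BC: given $\bm x^0\in\mathbb R^n$, for $k=0,1,\dots$: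 pick $\bm z^k\in\mathbf T(\bm x^k)$; select $I^{k+1}\subseteq[N]$; set $x_i^{k+1}=z_i^k$ for $i\in I^{k+1}$ and $x_i^{k+1}=x_i^k$ otherwise. KL property: a proper lsc $h$ has the KL property with exponent $\theta\in(0,1)$ at $\bar w\in\operatorname{dom}h$ if there are $\varepsilon,\eta,\varrho>0$ such that $\psi'(h(w)-h(\bar w))\operatorname{dist}(0,\partial h(w))\ge1$ for all $w$ with $\|w-\bar w\|<\varepsilon$ and $h(\bar w)<h(w)<h(\bar w)+\eta$, where $\psi(s)=\varrho s^{1-\theta}$ and $\partial$ is the limiting subdifferential; $h$ has the KL property with exponent $\theta$ if this holds at every $\bar w\in\operatorname{dom}\partial h$. $\hat\partial$ is the regular subdifferential. *)

From Stdlib Require Import Reals.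
From mathcomp Require Import ssreflect ssrfun ssrbool eqtype ssrnat seq fintype bigop.
Open Scope R_scope.

Definition sumR {n : nat} (f : 'I_n -> R) : R := \big[Rplus/0]_(i < n) f i.

Definition blk (d : nat) : Type := ordinal d -> R.
Definition dot1 {d : nat} (u v : blk d) : R := sumR (fun j => u j * v j).
Definition norm1 {d : nat} (u : blk d) : R := sqrt (dot1 u u).
Definition add1 {d : nat} (u v : blk d) : blk d := fun j => u j + v j.
Definition sub1 {d : nat} (u v : blk d) : blk d := fun j => u j - v j.

(** Block vectors x = (x_1,...,x_N), x_i in R^{nb i};  R^n with n = sum nb i. *)
Definition bvec (N : nat) (nb : 'I_N -> nat) := forall i : 'I_N, blk (nb i).

Section BV.
Context {N : nat} {nb : 'I_N -> nat}.
Definition bzero : bvec N nb := fun i j => 0.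
Definition badd (x y : bvec N nb) : bvec N nb := fun i j => x i j + y i j.
Definition bsub (x y : bvec N nb) : bvec N nb := fun i j => x i j - y i j.
Definition bscal (a : R) (x : bvec N nb) : bvec N nb := fun i j => a * x i j.
Definition bdot (x y : bvec N nb) : R := sumR (fun i => dot1 (x i) (y i)).
Definition bnorm (x : bvec N nb) : R := sqrt (bdot x x).
(** ||x||_V^2 for V = blockdiag(w_1 I, ..., w_N I). *)
Definition wnorm2 (w : 'I_N -> R) (x : bvec N nb) : R :=
  sumR (fun i => w i * dot1 (x i) (x i)).

Definition bconv (u : nat -> bvec N nb) (l : bvec N nb) : Prop :=
  forall eps, 0 < eps -> exists K, forall k, (K <= k)%nat -> bnorm (bsub (u k) l) < eps.

(** An extended-real-valued function h : R^n -> R ∪ {+oo} is encoded by a pair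
    (dom, h): h x is its (finite) value when dom x holds, and h = +oo outside dom. *)
Definition proper_ext (dom : bvec N nb -> Prop) : Prop := exists x, dom x.

Definition lsc_ext (dom : bvec N nb -> Prop) (h : bvec N nb -> R) : Prop :=
  forall x,
    (dom x -> forall eps, 0 < eps -> exists delta, 0 < delta /\
        forall y, dom y -> bnorm (bsub y x) < delta -> h x - eps < h y) /\
    (~ dom x -> forall M, exists delta, 0 < delta /\
        forall y, dom y -> bnorm (bsub y x) < delta -> M < h y).

Definition convex_ext (dom : bvec N nb -> Prop) (h : bvec N nb -> R) : Prop :=
  forall x y lam, dom x -> dom y -> 0 <= lam <= 1 ->
    dom (badd (bscal lam x) (bscal (1 - lam) y)) /\
    h (badd (bscal lam x) (bscal (1 - lam) y)) <= lam * h x + (1 - lam) * h y.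

Definition coercive_ext (dom : bvec N nb -> Prop) (h : bvec N nb -> R) : Prop :=
  forall M, exists r, forall x, dom x -> r <= bnorm x -> M <= h x.

Definition argmin_nonempty (dom : bvec N nb -> Prop) (h : bvec N nb -> R) : Prop :=
  exists x, dom x /\ forall y, dom y -> h x <= h y.

Definition regular_subdiff (dom : bvec N nb -> Prop) (h : bvec N nb -> R)
    (x v : bvec N nb) : Prop :=
  dom x /\ forall eps, 0 < eps -> exists delta, 0 < delta /\
    forall y, dom y -> bnorm (bsub y x) < delta ->
      - eps * bnorm (bsub y x) <= h y - h x - bdot v (bsub y x).

Definition limiting_subdiff (dom : bvec N nb -> Prop) (h : bvec N nb -> R)
    (x v : bvec N nb) : Prop :=
  dom x /\ exists (xs vs : nat -> bvec N nb),
    bconv xs x /\ Un_cv (fun k => h (xs k)) (h x) /\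
    (forall k, regular_subdiff dom h (xs k) (vs k)) /\ bconv vs v.

(** KL property with exponent theta at wb, with psi(s) = rho s^(1-theta),
    psi'(s) = rho (1-theta) s^(-theta).  The inequality
    psi'(h w - h wb) * dist(0, ∂h(w)) >= 1 is written out as: for every
    v ∈ ∂h(w), psi'(h w - h wb) * ||v|| >= 1 (dist = inf, = +oo if empty). *)
Definition KL_at (dom : bvec N nb -> Prop) (h : bvec N nb -> R) (theta : R)
    (wb : bvec N nb) : Prop :=
  dom wb /\ exists eps eta rho, 0 < eps /\ 0 < eta /\ 0 < rho /\
    forall w, bnorm (bsub w wb) < eps -> dom w ->
      h wb < h w -> h w < h wb + eta ->
      forall v, limiting_subdiff dom h w v ->
        1 <= rho * (1 - theta) * Rpower (h w - h wb) (- theta) * bnorm v.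

Definition KL_exp (dom : bvec N nb -> Prop) (h : bvec N nb -> R) (theta : R) : Prop :=
  forall wb, (exists v, limiting_subdiff dom h wb v) -> KL_at dom h theta wb.

Definition in_prox (dom : bvec N nb -> Prop) (G : bvec N nb -> R)
    (w : 'I_N -> R) (u z : bvec N nb) : Prop :=
  dom z /\ forall y, dom y ->
    G z + / 2 * wnorm2 w (bsub z u) <= G y + / 2 * wnorm2 w (bsub y u).

Definition Rlinear_R (a : nat -> R) (l : R) : Prop :=
  exists c rho, 0 < rho < 1 /\ forall k, Rabs (a k - l) <= c * rho ^ k.
Definition Rlinear_b (u : nat -> bvec N nb) (l : bvec N nb) : Prop :=
  exists c rho, 0 < rho < 1 /\ forall k, bnorm (bsub (u k) l) <= c * rho ^ k.
End BV.

Definition is_gradient {d : nat} (f : blk d -> R) (g : blk d -> blk d) : Prop :=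
  forall x eps, 0 < eps -> exists delta, 0 < delta /\
    forall hh, norm1 hh < delta ->
      Rabs (f (add1 x hh) - f x - dot1 (g x) hh) <= eps * norm1 hh.

Definition lipschitz_grad {d : nat} (g : blk d -> blk d) (L : R) : Prop :=
  forall x y, norm1 (sub1 (g x) (g y)) <= L * norm1 (sub1 x y).

Definition Fsum {N : nat} {nb : 'I_N -> nat} (f : forall i : 'I_N, blk (nb i) -> R)
    (x : bvec N nb) : R := / INR N * sumR (fun i => f i (x i)).
Definition gradF {N : nat} {nb : 'I_N -> nat}
    (gf : forall i : 'I_N, blk (nb i) -> blk (nb i)) (x : bvec N nb) : bvec N nb :=
  fun i j => / INR N * gf i (x i) j.

(** T(x) = prox_G^{Gamma^-1}(x - Gamma ∇F(x)) (set-valued). *)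
Definition in_T {N : nat} {nb : 'I_N -> nat} (dom : bvec N nb -> Prop)
    (G : bvec N nb -> R) (gf : forall i : 'I_N, blk (nb i) -> blk (nb i))
    (gamma : 'I_N -> R) (x z : bvec N nb) : Prop :=
  in_prox dom G (fun i => / gamma i)
    (fun i j => x i j - gamma i * gradF gf x i j) z.

From Stdlib Require Import Reals Lra Lia FunctionalExtensionality ClassicalEpsilon Classical_Prop.
From mathcomp Require Import ssreflect ssrfun ssrbool eqtype ssrnat seq fintype bigop.
From mathcomp Require Import zify.
From HB Require Import structures.
From Coquelicot Require Import Coquelicot.
Open Scope R_scope.

(** Following the usual Kurdyka–Łojasiewicz scheme, the
  iterates are analysed through the merit sequence Psi_k = q(x^k, z^k), where
    q(x, y) = G(y) + sum_i [ f_i(x_i)/N + <grad f_i(x_i)/N, y_i - x_i>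
                             + ||y_i - x_i||^2 / (2 gamma_i) ]
  is the block forward-backward model, minimised in y exactly by z in T(x).
  1. Generic facts: finite sums, Cauchy–Schwarz in abstract inner-product
     spaces (instantiated on blocks, block vectors and the Gamma^-1 metric),
     the descent lemma, the variational inequality and nonexpansiveness of
     the proximal map of a convex function, Bolzano–Weierstrass for block
     vectors, and elementary facts on powers t^a.
  2. Sufficient decrease: Psi_{k+1} <= Psi_k - a ||x^{k+1} - x^k||^2 and
     Phi(z^k) + a r_k^2 <= Psi_k <= Phi(z^k) + A r_k^2, r_k = ||z^k - x^k||.
  3. Essential cyclicity bounds r_k by the path length of x over a window of
     T steps, so r_k -> 0; coercivity gives a cluster point xbar of (z^k),
     which is a fixed point of T with Phi(xbar) = lim Psi_k and
     0 in the regular subdifferential of Phi at xbar.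
  4. The KL inequality at xbar, applied at z^k with the explicit subgradient
     of Phi at z^k, yields (Psi_k - Phi(xbar))^theta' <= K r_k with
     theta' = max(theta, 1/2); by concavity of t^(1-theta') this bounds the
     window path lengths by a telescoping sum, so x^k has finite length and
     converges (and so does z^k).  For theta <= 1/2 the same inequality makes
     the gaps Psi_k - Phi(xbar) decrease geometrically over windows, which
     gives R-linear rates. *)

HB.instance Definition _ := Monoid.isComLaw.Build R 0 Rplus
  (fun x y z => esym (Rplus_assoc x y z)) Rplus_comm Rplus_0_l.

Lemma sumR_ext {n} (f g : 'I_n -> R) : (forall i, f i = g i) -> sumR f = sumR g.
Proof. by move=> H; rewrite /sumR; apply: eq_bigr => i _; exact: H. Qed.

Lemma sumR_add {n} (f g : 'I_n -> R) : sumR (fun i => f i + g i) = sumR f + sumR g.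
Proof.
rewrite /sumR; apply: (big_ind3 (fun a b c => a = b + c)) => //; first lra.
by move=> *; subst; lra.
Qed.

Lemma sumR_scal {n} (c : R) (f : 'I_n -> R) : sumR (fun i => c * f i) = c * sumR f.
Proof.
rewrite /sumR; apply: (big_ind2 (fun a b => a = c * b)) => //; first lra.
by move=> *; subst; lra.
Qed.

Lemma sumR_sub {n} (f g : 'I_n -> R) : sumR (fun i => f i - g i) = sumR f - sumR g.
Proof.
have := sumR_add (fun i => f i - g i) g.
have -> : sumR (fun i => f i - g i + g i) = sumR f by apply: sumR_ext => i; lra.
lra.
Qed.

Lemma sumR_le {n} (f g : 'I_n -> R) : (forall i, f i <= g i) -> sumR f <= sumR g.
Proof.
move=> H; rewrite /sumR; apply: (big_ind2 (fun a b => a <= b)) => //; first lra.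
by move=> *; lra.
Qed.

Lemma sumR_0 n : sumR (fun _ : 'I_n => 0) = 0.
Proof. by rewrite /sumR; apply: (big_ind (fun a => a = 0)) => // *; subst; lra. Qed.

Lemma sumR_nonneg {n} (f : 'I_n -> R) : (forall i, 0 <= f i) -> 0 <= sumR f.
Proof. by move=> H; rewrite -(sumR_0 n); exact: sumR_le. Qed.

Lemma sumR_single {n} (f : 'I_n -> R) (i : 'I_n) : (forall j, 0 <= f j) -> f i <= sumR f.
Proof.
move=> H; rewrite /sumR (bigD1_seq i) ?mem_index_enum ?index_enum_uniq //=.
rewrite -{1}(Rplus_0_r (f i)); apply: Rplus_le_compat_l.
by apply: (big_ind (fun a => 0 <= a)) => //; [lra | move=> *; lra].
Qed.

Lemma sumR_le_const {n} (f : 'I_n -> R) (e : R) : (forall i, f i <= e) -> sumR f <= INR n * e.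
Proof.
move=> H; apply: Rle_trans (sumR_le f (fun _ => e) H) _.
rewrite /sumR big_const_ord; clear f H.
by elim: n => [|n IH]; [simpl; lra | rewrite S_INR /=; lra].
Qed.

Lemma sumR_sq_le {n} (a : 'I_n -> R) :
  (forall i, 0 <= a i) -> sumR (fun i => a i * a i) <= sumR a * sumR a.
Proof.
move=> H; rewrite -sumR_scal; apply: sumR_le => i.
by have := sumR_single a i H; have := H i; nra.
Qed.

Lemma sumR_abs {n} (f : 'I_n -> R) : Rabs (sumR f) <= sumR (fun i => Rabs (f i)).
Proof.
rewrite /sumR; apply: (big_ind2 (fun a b => Rabs a <= b)) => //.
- by rewrite Rabs_R0; lra.
- by move=> x1 x2 y1 y2 H1 H2; apply: Rle_trans (Rabs_triang _ _) _; lra.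
- by move=> *; lra.
Qed.

Lemma sumR_majorant {n} (c : 'I_n -> R) : 0 < 1 + sumR (fun i => Rabs (c i)) /\
  forall i, c i <= 1 + sumR (fun i => Rabs (c i)).
Proof.
have P := sumR_nonneg (fun i => Rabs (c i)) (fun i => Rabs_pos _).
split; first lra.
by move=> i; have := sumR_single (fun i => Rabs (c i)) i (fun i => Rabs_pos _);
  have := Rle_abs (c i); lra.
Qed.

Lemma sumR_cv {m} (g : nat -> 'I_m -> R) (l : 'I_m -> R) :
  (forall i, Un_cv (fun n => g n i) (l i)) -> Un_cv (fun n => sumR (g n)) (sumR l).
Proof.
elim: m g l => [|m IH] g l H.
- have E : forall h : 'I_0 -> R, sumR h = 0 by move=> h; rewrite /sumR big_ord0.
  rewrite E => eps He; exists 0%nat => n _.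
  by rewrite E /R_dist Rminus_0_r Rabs_R0; lra.
- have E : forall h : 'I_m.+1 -> R,
      sumR h = sumR (fun i : 'I_m => h (widen_ord (leqnSn m) i)) + h ord_max.
    by move=> h; rewrite /sumR big_ord_recr.
  rewrite E.
  have -> : (fun n => sumR (g n)) =
      (fun n => sumR (fun i : 'I_m => g n (widen_ord (leqnSn m) i)) + g n ord_max).
    by apply: functional_extensionality => n; rewrite E.
  apply: CV_plus; last exact: H.
  by apply: (IH (fun n i => g n (widen_ord (leqnSn m) i))) => i; exact: H.
Qed.

(** A minimal interface for a real vector space with a symmetric, positive
  semidefinite bilinear form; it is instantiated on single blocks, on block
  vectors and on block vectors with the weighted metric ||.||_V. *)
Record IPS := mkIPS {
  ipT : Type;
  ipadd : ipT -> ipT -> ipT;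
  ipscal : R -> ipT -> ipT;
  ipdot : ipT -> ipT -> R;
  ipsym : forall x y, ipdot x y = ipdot y x;
  ippos : forall x, 0 <= ipdot x x;
  ipaddl : forall x y z, ipdot (ipadd x y) z = ipdot x z + ipdot y z;
  ipscall : forall a x y, ipdot (ipscal a x) y = a * ipdot x y }.

Definition ipnorm (V : IPS) (x : ipT V) := sqrt (ipdot V x x).

Section InnerProduct.
Variable V : IPS.

Lemma ipaddr x y z : ipdot V x (ipadd V y z) = ipdot V x y + ipdot V x z.
Proof. by rewrite ipsym ipaddl (ipsym V y) (ipsym V z). Qed.

Lemma ipscalr a x y : ipdot V x (ipscal V a y) = a * ipdot V x y.
Proof. by rewrite ipsym ipscall ipsym. Qed.

Lemma ip_expand x y t :
  ipdot V (ipadd V x (ipscal V t y)) (ipadd V x (ipscal V t y)) =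
  ipdot V x x + 2 * t * ipdot V x y + t * t * ipdot V y y.
Proof. by rewrite !ipaddl !ipaddr !ipscall !ipscalr (ipsym V y x); ring. Qed.

(** Cauchy–Schwarz, squared form: the quadratic t |-> |x + t y|^2 is nonnegative. *)
Lemma ip_CS2 x y : ipdot V x y * ipdot V x y <= ipdot V x x * ipdot V y y.
Proof.
have H := fun t => ip_expand x y t.
have P := fun t => ippos V (ipadd V x (ipscal V t y)).
have Hx := ippos V x; have Hy := ippos V y.
destruct (Req_dec (ipdot V y y) 0) as [E|E].
- destruct (Req_dec (ipdot V x y) 0) as [E2|E2]; first by rewrite E2; nra.
  exfalso; have H1 := P (- (ipdot V x x + 1) / (2 * ipdot V x y)).
  rewrite H E in H1.
  have : 2 * (- (ipdot V x x + 1) / (2 * ipdot V x y)) * ipdot V x y = - (ipdot V x x + 1)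
    by field; lra.
  nra.
- have Hy' : 0 < ipdot V y y by lra.
  have H1 := P (- (ipdot V x y) / ipdot V y y); rewrite H in H1.
  have Heq : ipdot V x x + 2 * (- ipdot V x y / ipdot V y y) * ipdot V x y +
      - ipdot V x y / ipdot V y y * (- ipdot V x y / ipdot V y y) * ipdot V y y =
      (ipdot V x x * ipdot V y y - ipdot V x y * ipdot V x y) / ipdot V y y
    by field; lra.
  rewrite Heq in H1.
  by have := Rmult_le_pos _ _ H1 (Rlt_le _ _ Hy'); rewrite /Rdiv Rmult_assoc Rinv_l; lra.
Qed.

Lemma ip_CS x y : Rabs (ipdot V x y) <= ipnorm V x * ipnorm V y.
Proof.
rewrite /ipnorm -sqrt_mult; try exact: ippos.
by rewrite -sqrt_Rsqr_abs; apply: sqrt_le_1_alt; rewrite /Rsqr; exact: ip_CS2.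
Qed.

Lemma ipnorm_pos x : 0 <= ipnorm V x.
Proof. exact: sqrt_pos. Qed.

Lemma ipnorm_sq x : ipnorm V x * ipnorm V x = ipdot V x x.
Proof. by apply: sqrt_sqrt; exact: ippos. Qed.

Lemma ip_triangle x y : ipnorm V (ipadd V x y) <= ipnorm V x + ipnorm V y.
Proof.
have Hxy := ip_CS x y; have Hx := ipnorm_pos x; have Hy := ipnorm_pos y.
apply: Rsqr_incr_0_var; last lra.
rewrite /Rsqr ipnorm_sq ipaddl !ipaddr -!ipnorm_sq (ipsym V y x).
by have := Rle_abs (ipdot V x y); nra.
Qed.

Lemma ipnorm_scal a x : ipnorm V (ipscal V a x) = Rabs a * ipnorm V x.
Proof.
rewrite /ipnorm ipscall ipscalr -Rmult_assoc sqrt_mult; [|nra|exact: ippos].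
by rewrite -sqrt_Rsqr_abs.
Qed.

End InnerProduct.

Definition scal1 {d} (a : R) (u : blk d) : blk d := fun j => a * u j.

Program Definition IP1 (d : nat) : IPS := mkIPS (blk d) add1 scal1 dot1 _ _ _ _.
Next Obligation. by rewrite /dot1; apply: sumR_ext => j; ring. Qed.
Next Obligation. by rewrite /dot1; apply: sumR_nonneg => j; nra. Qed.
Next Obligation. by rewrite /dot1 /add1 -sumR_add; apply: sumR_ext => j; ring. Qed.
Next Obligation. by rewrite /dot1 /scal1 -sumR_scal; apply: sumR_ext => j; ring. Qed.

Section Block.
Context {d : nat}.
Implicit Types u v w : blk d.

Lemma dot1_sym u v : dot1 u v = dot1 v u.
Proof. exact: (ipsym (IP1 d)). Qed.
Lemma dot1_pos u : 0 <= dot1 u u.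
Proof. exact: (ippos (IP1 d)). Qed.
Lemma dot1_CS u v : Rabs (dot1 u v) <= norm1 u * norm1 v.
Proof. exact: (ip_CS (IP1 d)). Qed.
Lemma norm1_pos u : 0 <= norm1 u.
Proof. exact: sqrt_pos. Qed.
Lemma norm1_sq u : norm1 u * norm1 u = dot1 u u.
Proof. exact: (ipnorm_sq (IP1 d)). Qed.
Lemma norm1_add u v : norm1 (add1 u v) <= norm1 u + norm1 v.
Proof. exact: (ip_triangle (IP1 d)). Qed.
Lemma norm1_scal a u : norm1 (scal1 a u) = Rabs a * norm1 u.
Proof. exact: (ipnorm_scal (IP1 d)). Qed.
Lemma dot1_add_l u v w : dot1 (add1 u v) w = dot1 u w + dot1 v w.
Proof. exact: (ipaddl (IP1 d)). Qed.
Lemma dot1_scal_l a u w : dot1 (scal1 a u) w = a * dot1 u w.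
Proof. exact: (ipscall (IP1 d)). Qed.
Lemma dot1_scal_r a u w : dot1 w (scal1 a u) = a * dot1 w u.
Proof. by rewrite !(dot1_sym w) dot1_scal_l. Qed.
Lemma dot1_sub_l u v w : dot1 (sub1 u v) w = dot1 u w - dot1 v w.
Proof.
have -> : sub1 u v = add1 u (scal1 (-1) v).
  by apply: functional_extensionality => j; rewrite /sub1 /add1 /scal1; ring.
by rewrite dot1_add_l dot1_scal_l; ring.
Qed.

Lemma sub1_self u : sub1 u u = scal1 0 u.
Proof. by apply: functional_extensionality => j; rewrite /sub1 /scal1; ring. Qed.

Lemma abs_le_norm1 u j : Rabs (u j) <= norm1 u.
Proof.
rewrite -sqrt_Rsqr_abs; apply: sqrt_le_1_alt; rewrite /Rsqr /dot1.
by apply: (sumR_single (fun j => u j * u j)) => k; nra.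
Qed.

End Block.

Lemma sqrt_sum_le {n} (a : 'I_n -> R) : (forall i, 0 <= a i) ->
  sqrt (sumR (fun i => a i * a i)) <= sumR a.
Proof.
move=> H; have Hs := sumR_nonneg a H; rewrite -(sqrt_square (sumR a)) //.
by apply: sqrt_le_1_alt; exact: sumR_sq_le.
Qed.

Lemma norm1_le_sum {d} (u : blk d) : norm1 u <= sumR (fun j => Rabs (u j)).
Proof.
apply: Rle_trans (sqrt_sum_le (fun j => Rabs (u j)) (fun j => Rabs_pos _)).
apply: sqrt_le_1_alt; rewrite /dot1; apply: sumR_le => j.
by rewrite -Rabs_mult; apply: Rle_abs.
Qed.

Lemma sumR_CS {n} (a : 'I_n -> R) : sumR a * sumR a <= INR n * sumR (fun i => a i * a i).
Proof.
have H := dot1_CS (a : blk n) (fun _ => 1).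
have E1 : dot1 (a : blk n) (fun _ => 1) = sumR a by rewrite /dot1; apply: sumR_ext => i; ring.
have E2 : norm1 (fun _ : 'I_n => 1) * norm1 (fun _ : 'I_n => 1) = INR n.
  rewrite norm1_sq /dot1 /sumR big_const_ord; clear H E1.
  by elim: n {a} => [|n IH]; [simpl; lra | rewrite S_INR /= -IH; lra].
rewrite E1 in H.
set na := norm1 (a : blk n) in H; set n1 := norm1 (fun _ : 'I_n => 1) in H E2.
have Hna : 0 <= na := norm1_pos _; have Hn1 : 0 <= n1 := norm1_pos _.
have H2 : Rabs (sumR a) * Rabs (sumR a) <= (na * n1) * (na * n1)
  by apply: Rmult_le_compat; try exact: Rabs_pos; lra.
have E3 : sumR a * sumR a = Rabs (sumR a) * Rabs (sumR a)
  by rewrite -Rabs_mult Rabs_pos_eq //; nra.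
have E4 : na * na = sumR (fun i => a i * a i) by rewrite /na norm1_sq.
by rewrite E3 -E2 -E4; nra.
Qed.

Program Definition IPB (N : nat) (nb : 'I_N -> nat) : IPS :=
  mkIPS (bvec N nb) badd bscal bdot _ _ _ _.
Next Obligation. by rewrite /bdot; apply: sumR_ext => i; exact: dot1_sym. Qed.
Next Obligation. by rewrite /bdot; apply: sumR_nonneg => i; exact: dot1_pos. Qed.
Next Obligation. by rewrite /bdot -sumR_add; apply: sumR_ext => i; exact: dot1_add_l. Qed.
Next Obligation. by rewrite /bdot -sumR_scal; apply: sumR_ext => i; exact: dot1_scal_l. Qed.

Definition wdot {N nb} (w : 'I_N -> R) (x y : bvec N nb) : R :=
  sumR (fun i => w i * dot1 (x i) (y i)).

Program Definition IPW (N : nat) (nb : 'I_N -> nat) (w : 'I_N -> R)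
    (Hw : forall i, 0 <= w i) : IPS :=
  mkIPS (bvec N nb) badd bscal (wdot w) _ _ _ _.
Next Obligation. by rewrite /wdot; apply: sumR_ext => i; rewrite dot1_sym. Qed.
Next Obligation.
by rewrite /wdot; apply: sumR_nonneg => i; apply: Rmult_le_pos => //; exact: dot1_pos.
Qed.
Next Obligation.
rewrite /wdot -sumR_add; apply: sumR_ext => i.
by rewrite -Rmult_plus_distr_l dot1_add_l.
Qed.
Next Obligation.
rewrite /wdot -sumR_scal; apply: sumR_ext => i.
by rewrite dot1_scal_l; ring.
Qed.

Lemma bvec_ext {N nb} (x y : bvec N nb) : (forall i j, x i j = y i j) -> x = y.
Proof.
move=> H; apply: functional_extensionality_dep => i.
by apply: functional_extensionality => j; exact: H.
Qed.

Section BlockVectors.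
Context {N : nat} {nb : 'I_N -> nat}.
Implicit Types x y z : bvec N nb.

Lemma bdot_pos x : 0 <= bdot x x.
Proof. exact: (ippos (IPB N nb)). Qed.
Lemma bdot_CS x y : Rabs (bdot x y) <= bnorm x * bnorm y.
Proof. exact: (ip_CS (IPB N nb)). Qed.
Lemma bnorm_pos x : 0 <= bnorm x.
Proof. exact: sqrt_pos. Qed.
Lemma bnorm_sq x : bnorm x * bnorm x = bdot x x.
Proof. exact: (ipnorm_sq (IPB N nb)). Qed.
Lemma bnorm_add x y : bnorm (badd x y) <= bnorm x + bnorm y.
Proof. exact: (ip_triangle (IPB N nb)). Qed.
Lemma bnorm_scal a x : bnorm (bscal a x) = Rabs a * bnorm x.
Proof. exact: (ipnorm_scal (IPB N nb)). Qed.
Lemma bdot_add_l x y z : bdot (badd x y) z = bdot x z + bdot y z.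
Proof. exact: (ipaddl (IPB N nb)). Qed.

Lemma bnorm_opp x y : bnorm (bsub x y) = bnorm (bsub y x).
Proof.
have -> : bsub x y = bscal (-1) (bsub y x)
  by apply: bvec_ext => i j; rewrite /bsub /bscal; ring.
by rewrite bnorm_scal Rabs_Ropp Rabs_R1; ring.
Qed.

Lemma bnorm_tri x y z : bnorm (bsub x z) <= bnorm (bsub x y) + bnorm (bsub y z).
Proof.
have -> : bsub x z = badd (bsub x y) (bsub y z)
  by apply: bvec_ext => i j; rewrite /bsub /badd; ring.
exact: bnorm_add.
Qed.

Lemma bnorm_self x : bnorm (bsub x x) = 0.
Proof.
have -> : bsub x x = bscal 0 x by apply: bvec_ext => i j; rewrite /bsub /bscal; ring.
by rewrite bnorm_scal Rabs_R0; ring.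
Qed.

Lemma bnorm_sub_le x y : bnorm (bsub x y) <= bnorm x + bnorm y.
Proof.
have -> : bsub x y = badd x (bscal (-1) y)
  by apply: bvec_ext => i j; rewrite /bsub /badd /bscal; ring.
by apply: Rle_trans (bnorm_add _ _) _; rewrite bnorm_scal Rabs_Ropp Rabs_R1; lra.
Qed.

Lemma bsub_diff_le (a b c d : bvec N nb) :
  bnorm (bsub (bsub a b) (bsub c d)) <= bnorm (bsub a c) + bnorm (bsub b d).
Proof.
have -> : bsub (bsub a b) (bsub c d) = bsub (bsub a c) (bsub b d)
  by apply: bvec_ext => i j; rewrite /bsub; ring.
exact: bnorm_sub_le.
Qed.

Lemma norm1_le_bnorm x i : norm1 (x i) <= bnorm x.
Proof.
apply: sqrt_le_1_alt; rewrite /bdot.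
by apply: (sumR_single (fun i => dot1 (x i) (x i))) => j; exact: dot1_pos.
Qed.

Lemma bnorm_le_sum x : bnorm x <= sumR (fun i => norm1 (x i)).
Proof.
apply: Rle_trans (sqrt_sum_le (fun i => norm1 (x i)) (fun i => norm1_pos _)).
by apply: sqrt_le_1_alt; rewrite /bdot; apply: sumR_le => i; rewrite norm1_sq; lra.
Qed.

Lemma bnorm_blockwise (a b : bvec N nb) c : 0 <= c ->
  (forall i, norm1 (a i) <= c * norm1 (b i)) -> bnorm a <= c * bnorm b.
Proof.
move=> Hc H; rewrite -(sqrt_square c) // /bnorm -sqrt_mult; [|nra|exact: bdot_pos].
apply: sqrt_le_1_alt; rewrite /bdot -sumR_scal; apply: sumR_le => i.
rewrite -!norm1_sq; have := H i; have := norm1_pos (a i); have := norm1_pos (b i); nra.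
Qed.

Definition wn (w : 'I_N -> R) x := sqrt (wnorm2 w x).

Section Weighted.
Variable w : 'I_N -> R.
Hypothesis Hw : forall i, 0 <= w i.

Lemma wnorm2_wdot x : wnorm2 w x = wdot w x x.
Proof. by []. Qed.
Lemma wdot_sym x y : wdot w x y = wdot w y x.
Proof. exact: (ipsym (IPW N nb w Hw)). Qed.
Lemma wn_pos x : 0 <= wn w x.
Proof. exact: sqrt_pos. Qed.
Lemma wnorm2_pos x : 0 <= wnorm2 w x.
Proof. exact: (ippos (IPW N nb w Hw)). Qed.
Lemma wn_sq x : wn w x * wn w x = wnorm2 w x.
Proof. exact: (ipnorm_sq (IPW N nb w Hw)). Qed.
Lemma wdot_CS x y : Rabs (wdot w x y) <= wn w x * wn w y.
Proof. exact: (ip_CS (IPW N nb w Hw)). Qed.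
Lemma wdot_add_l x y z : wdot w (badd x y) z = wdot w x z + wdot w y z.
Proof. exact: (ipaddl (IPW N nb w Hw)). Qed.
Lemma wdot_scal_l a x z : wdot w (bscal a x) z = a * wdot w x z.
Proof. exact: (ipscall (IPW N nb w Hw)). Qed.
Lemma wdot_sub_l x y z : wdot w (bsub x y) z = wdot w x z - wdot w y z.
Proof.
have -> : bsub x y = badd x (bscal (-1) y)
  by apply: bvec_ext => i j; rewrite /bsub /badd /bscal; ring.
by rewrite wdot_add_l wdot_scal_l; ring.
Qed.
Lemma wdot_sub_r x y z : wdot w z (bsub x y) = wdot w z x - wdot w z y.
Proof. by rewrite !(wdot_sym z) wdot_sub_l. Qed.

Lemma wn_tri x y z : wn w (bsub x z) <= wn w (bsub x y) + wn w (bsub y z).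
Proof.
have -> : bsub x z = badd (bsub x y) (bsub y z)
  by apply: bvec_ext => i j; rewrite /bsub /badd; ring.
exact: (ip_triangle (IPW N nb w Hw)).
Qed.

Lemma wn_opp x y : wn w (bsub x y) = wn w (bsub y x).
Proof.
have -> : bsub x y = bscal (-1) (bsub y x)
  by apply: bvec_ext => i j; rewrite /bsub /bscal; ring.
have := ipnorm_scal (IPW N nb w Hw) (-1) (bsub y x).
by rewrite /ipnorm /= /wn !wnorm2_wdot => ->; rewrite Rabs_Ropp Rabs_R1; ring.
Qed.

Lemma wn_sub0 x : wn w (bsub x bzero) = wn w x.
Proof. by congr (wn w _); apply: bvec_ext => i j; rewrite /bsub /bzero; ring. Qed.

End Weighted.

Lemma wn_le w M x : 0 <= M -> (forall i, w i <= M) -> wn w x <= sqrt M * bnorm x.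
Proof.
move=> HM H; rewrite /wn /bnorm -sqrt_mult //; last exact: bdot_pos.
apply: sqrt_le_1_alt; rewrite /wnorm2 /bdot -sumR_scal; apply: sumR_le => i.
by apply: Rmult_le_compat_r; [exact: dot1_pos | exact: H].
Qed.

Lemma wn_ge w m x : 0 <= m -> (forall i, m <= w i) -> sqrt m * bnorm x <= wn w x.
Proof.
move=> Hm H; rewrite /wn /bnorm -sqrt_mult //; last exact: bdot_pos.
apply: sqrt_le_1_alt; rewrite /wnorm2 /bdot -sumR_scal; apply: sumR_le => i.
by apply: Rmult_le_compat_r; [exact: dot1_pos | exact: H].
Qed.

Lemma regular_limiting dom (h : bvec N nb -> R) y v :
  regular_subdiff dom h y v -> limiting_subdiff dom h y v.
Proof.
move=> H; split; first exact: (proj1 H).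
exists (fun _ => y), (fun _ => v); split; [|split; [|split]] => //.
- by move=> e He; exists 0%nat => k _; rewrite bnorm_self.
- by move=> e He; exists 0%nat => k _; rewrite /R_dist Rminus_diag Rabs_R0.
- by move=> e He; exists 0%nat => k _; rewrite bnorm_self.
Qed.

End BlockVectors.

Definition lpt {d} (x h : blk d) (t : R) : blk d := fun j => x j + t * h j.

Lemma deriv_line {d} (f : blk d -> R) g (x h : blk d) t :
  is_gradient f g -> derivable_pt_lim (fun t => f (lpt x h t)) t (dot1 (g (lpt x h t)) h).
Proof.
move=> Hg eps Heps.
set nh := norm1 h; have Hnh : 0 <= nh := norm1_pos h.
have Heps' : 0 < eps / (2 * (nh + 1)) by apply: Rdiv_lt_0_compat; lra.
have [del [Hdel H]] := Hg (lpt x h t) _ Heps'.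
have Hd : 0 < del / (nh + 1) by apply: Rdiv_lt_0_compat; lra.
exists (mkposreal _ Hd) => s Hs0 Hs /=; simpl in Hs.
have Hn : norm1 (scal1 s h) < del.
  rewrite norm1_scal; have Has := Rabs_pos s.
  have : Rabs s * (nh + 1) < del.
    have := Rmult_lt_compat_r (nh + 1) _ _ ltac:(lra) Hs.
    by rewrite /Rdiv Rmult_assoc Rinv_l; lra.
  by rewrite -/nh; nra.
have := H _ Hn.
have -> : add1 (lpt x h t) (scal1 s h) = lpt x h (t + s)
  by apply: functional_extensionality => j; rewrite /add1 /lpt /scal1; ring.
rewrite dot1_scal_r norm1_scal -/nh => H2.
set D := dot1 (g (lpt x h t)) h in H2 *.
have Has : 0 < Rabs s by apply: Rabs_pos_lt.
have -> : (f (lpt x h (t + s)) - f (lpt x h t)) / s - D =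
  (f (lpt x h (t + s)) - f (lpt x h t) - s * D) / s by field.
rewrite Rabs_div //; apply: (Rmult_lt_reg_r (Rabs s)) => //.
rewrite /Rdiv Rmult_assoc Rinv_l; last lra; rewrite Rmult_1_r.
apply: Rle_lt_trans H2 _.
have : eps / (2 * (nh + 1)) * nh < eps.
  have -> : eps / (2 * (nh + 1)) * nh = eps * (nh / (2 * (nh + 1))) by field; lra.
  have : nh / (2 * (nh + 1)) < 1.
    apply: (Rmult_lt_reg_r (2 * (nh + 1))); first lra.
    by rewrite /Rdiv Rmult_assoc Rinv_l; lra.
  have : 0 <= nh / (2 * (nh + 1)) by apply: Rdiv_le_0_compat; lra.
  nra.
nra.
Qed.

(** Descent lemma: |f(y) - f(x) - <grad f(x), y - x>| <= L/2 ||y - x||^2 for an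
    L-Lipschitz gradient; proved by the mean value theorem applied to
    f(x + t(y-x)) -+ (t <grad f(x), y-x> + L t^2/2 ||y-x||^2). *)
Lemma descent_lemma {d} (f : blk d -> R) g L (x y : blk d) :
  is_gradient f g -> lipschitz_grad g L -> 0 <= L ->
  Rabs (f y - f x - dot1 (g x) (sub1 y x)) <= L / 2 * dot1 (sub1 y x) (sub1 y x).
Proof.
move=> Hg HL HL0; rewrite -norm1_sq.
set h := sub1 y x; set D0 := dot1 (g x) h; set nh2 := norm1 h * norm1 h.
have Ex : lpt x h 0 = x by apply: functional_extensionality => j; rewrite /lpt; ring.
have Ey : lpt x h 1 = y
  by apply: functional_extensionality => j; rewrite /lpt /h /sub1; ring.
have Hbound : forall t, 0 <= t -> Rabs (dot1 (g (lpt x h t)) h - D0) <= L * t * nh2.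
  move=> t Ht; rewrite /D0 -dot1_sub_l; apply: Rle_trans (dot1_CS _ _) _.
  have Hl := HL (lpt x h t) x.
  have E : sub1 (lpt x h t) x = scal1 t h
    by apply: functional_extensionality => j; rewrite /lpt /sub1 /scal1; ring.
  move: Hl; rewrite E norm1_scal Rabs_pos_eq // => Hl.
  by rewrite /nh2; have := norm1_pos h;
    have := norm1_pos (sub1 (g (lpt x h t)) (g x)); nra.
have Hpsi : forall s t, derivable_pt_lim
   (fun t => f (lpt x h t) - (t * D0 + s * (L / 2 * t * t * nh2))) t
   (dot1 (g (lpt x h t)) h - (D0 + s * (L * t * nh2))).
  move=> s t; apply: (derivable_pt_lim_minus (fun t => f (lpt x h t))
    (fun t => t * D0 + s * (L / 2 * t * t * nh2))); first exact: deriv_line.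
  by apply/is_derive_Reals; auto_derive => //; field.
have [c1 [E1 Hc1]] := MVT_cor2 _ _ 0 1 Rlt_0_1 (fun c _ => Hpsi 1 c).
have [c2 [E2 Hc2]] := MVT_cor2 _ _ 0 1 Rlt_0_1 (fun c _ => Hpsi (-1) c).
rewrite Ex Ey in E1 E2.
have B1 := Hbound c1 ltac:(lra); have B2 := Hbound c2 ltac:(lra).
apply: Rabs_le; move: B1 B2 => /Rabs_le_between B1 /Rabs_le_between B2.
have Hnh : 0 <= nh2 by rewrite /nh2; have := norm1_pos h; nra.
by split; nra.
Qed.

Lemma small_lambda K B : 0 <= B -> (forall l, 0 < l <= 1 -> K <= l * B) -> K <= 0.
Proof.
move=> HB H; apply: Rnot_lt_le => HK.
have Hl : 0 < K / (K + B + 1) <= 1.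
  split; first by apply: Rdiv_lt_0_compat; lra.
  by apply: (Rmult_le_reg_r (K + B + 1)); [lra | rewrite /Rdiv Rmult_assoc Rinv_l; lra].
have := H _ Hl.
have -> : K / (K + B + 1) * B = K * (B / (K + B + 1)) by field; lra.
have : B / (K + B + 1) < 1.
  by apply: (Rmult_lt_reg_r (K + B + 1)); [lra | rewrite /Rdiv Rmult_assoc Rinv_l; lra].
nra.
Qed.

Section Prox.
Context {N : nat} {nb : 'I_N -> nat}.
Variable dom : bvec N nb -> Prop.
Variable G : bvec N nb -> R.
Variable w : 'I_N -> R.
Hypothesis Hw : forall i, 0 <= w i.
Hypothesis Hconv : convex_ext dom G.

(** Variational inequality of the prox: z = prox_G^V(u) satisfies
    G(z) - G(y) <= <u - z, z - y>_V for every y in dom G; compare z with the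
    convex combinations z + l (y - z) and let l -> 0. *)
Lemma prox_VI u z y : in_prox dom G w u z -> dom y ->
  G z - G y <= wdot w (bsub u z) (bsub z y).
Proof.
move=> [Hz Hmin] Hy.
set K := G z - G y - wdot w (bsub u z) (bsub z y).
suff : K <= 0 by rewrite /K; lra.
apply: (small_lambda K (/2 * wnorm2 w (bsub y z))).
  by have := wnorm2_pos w Hw (bsub y z); lra.
move=> l Hl.
have [Hd Hc] := Hconv y z l Hy Hz ltac:(lra).
have Hm := Hmin _ Hd.
have E : bsub (badd (bscal l y) (bscal (1 - l) z)) u = badd (bsub z u) (bscal l (bsub y z))
  by apply: bvec_ext => i j; rewrite /bsub /badd /bscal; ring.
rewrite E in Hm.
have Ex := ip_expand (IPW N nb w Hw) (bsub z u) (bsub y z) l; simpl in Ex.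
rewrite !wnorm2_wdot Ex in Hm.
have E2 : wdot w (bsub z u) (bsub y z) = wdot w (bsub u z) (bsub z y)
  by rewrite !wdot_sub_l // !wdot_sub_r //; ring.
rewrite E2 -!wnorm2_wdot in Hm.
apply: (Rmult_le_reg_l l); first lra.
by rewrite /K; nra.
Qed.

Lemma prox_nonexp u1 u2 z1 z2 : in_prox dom G w u1 z1 -> in_prox dom G w u2 z2 ->
  wn w (bsub z1 z2) <= wn w (bsub u1 u2).
Proof.
move=> H1 H2.
have V1 := prox_VI u1 z1 z2 H1 (proj1 H2).
have V2 := prox_VI u2 z2 z1 H2 (proj1 H1).
have Key : wnorm2 w (bsub z1 z2) <= wdot w (bsub u1 u2) (bsub z1 z2).
  move: V1 V2; rewrite !wnorm2_wdot !wdot_sub_l // !wdot_sub_r //.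
  by rewrite (wdot_sym w Hw z2 z1) (wdot_sym w Hw u2 z1) (wdot_sym w Hw u1 z2); lra.
have CS := wdot_CS w Hw (bsub u1 u2) (bsub z1 z2).
have := Rle_abs (wdot w (bsub u1 u2) (bsub z1 z2)).
rewrite -(wn_sq w Hw (bsub z1 z2)) in Key.
have := wn_pos w (bsub z1 z2); have := wn_pos w (bsub u1 u2).
move=> P1 P2 A.
destruct (Req_dec (wn w (bsub z1 z2)) 0) as [E|E]; first by rewrite E.
have : 0 < wn w (bsub z1 z2) by lra.
nra.
Qed.

End Prox.

Definition sincr (phi : nat -> nat) := forall n, (phi n < phi (S n))%nat.

Lemma sincr_ge phi : sincr phi -> forall n, (n <= phi n)%nat.
Proof. by move=> H; elim => [|n IH] //; have := H n; lia. Qed.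

Lemma sincr_mono phi : sincr phi -> forall m n, (m <= n)%nat -> (phi m <= phi n)%nat.
Proof.
move=> H m n; elim: n => [|n IH] Hmn; first by rewrite (_ : m = 0%nat); last lia.
case: (ltngtP m (S n)) => Hc; [|lia|by rewrite Hc].
by have := IH ltac:(lia); have := H n; lia.
Qed.

Lemma sincr_comp phi psi : sincr phi -> sincr psi -> sincr (fun n => phi (psi n)).
Proof.
move=> H1 H2 n.
by have := sincr_mono phi H1 (S (psi n)) (psi (S n)) (H2 n); have := H1 (psi n); lia.
Qed.

Lemma cv_sub (a : nat -> R) l phi : sincr phi -> Un_cv a l -> Un_cv (fun n => a (phi n)) l.
Proof.
move=> Hp H eps He; have [K HK] := H eps He; exists K => n Hn.
by apply: HK; apply/leP; have := sincr_ge phi Hp n; move/leP: Hn; lia.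
Qed.

Lemma BW1 (a : nat -> R) B : (forall k, Rabs (a k) <= B) ->
  exists phi, sincr phi /\ exists l, Un_cv (fun n => a (phi n)) l.
Proof.
move=> Hb.
have [l Hl] := Bolzano_Weierstrass a _ (compact_P3 (- B) B)
  (fun k => proj1 (Rabs_le_between _ _) (Hb k)).
have Hp : forall (K n : nat), exists p, (K <= p)%nat /\ Rabs (a p - l) < / (INR n + 1).
  move=> K n; have Hpos : 0 < / (INR n + 1)
    by apply: Rinv_0_lt_compat; have := pos_INR n; lra.
  have [p [Hp1 Hp2]] := Hl (disc l (mkposreal _ Hpos)) K
    (ex_intro _ (mkposreal _ Hpos) (fun y H => H)).
  by exists p; split; [exact/leP | exact: Hp2].
pose pick K n := proj1_sig (constructive_indefinite_description _ (Hp K n)).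
have Hpick : forall K n, (K <= pick K n)%nat /\ Rabs (a (pick K n) - l) < / (INR n + 1)
  by move=> K n; exact: proj2_sig (constructive_indefinite_description _ (Hp K n)).
pose fix phi n := match n with 0 => pick 0%nat 0%nat | S m => pick (S (phi m)) (S m) end.
exists phi; split; first by move=> n /=; exact: (proj1 (Hpick _ _)).
exists l => eps He.
have [n0 Hn0] := INR_archimed eps 1 He.
exists n0 => n Hn; rewrite /R_dist.
have Hn' : (n0 <= n)%nat by apply/leP.
have Hphi : Rabs (a (phi n) - l) < / (INR n + 1)
  by case: n Hn Hn' => [|n] _ _ /=; exact: (proj2 (Hpick _ _)).
apply: Rlt_le_trans Hphi _.
have H1 : INR n0 <= INR n by apply: le_INR; apply/leP.
have H0 := pos_INR n0.
rewrite -(Rinv_inv eps); apply: Rinv_le_contravar; first by apply: Rinv_0_lt_compat.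
by apply: (Rmult_le_reg_r eps) => //; rewrite Rinv_l; [nra | lra].
Qed.

Lemma In_of_mem {T : eqType} (t : T) (s : seq T) : t \in s -> List.In t s.
Proof.
elim: s => [|y s IH] //=; rewrite inE => /orP [/eqP ->|H]; [by left | right; exact: IH].
Qed.

Lemma BW_list {T} (u : nat -> T) B (cs : list (T -> R)) :
  (forall c, List.In c cs -> forall k, Rabs (c (u k)) <= B) ->
  exists phi, sincr phi /\
    forall c, List.In c cs -> exists l, Un_cv (fun n => c (u (phi n))) l.
Proof.
elim: cs => [|c cs IH] Hb.
- by exists (fun n => n); split; [move=> n; exact: ltnSn | move=> c []].
- have [phi1 [Hp1 H1]] := IH (fun c' Hc' => Hb c' (or_intror Hc')).
  have [phi2 [Hp2 [l Hl]]] :=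
    BW1 (fun n => c (u (phi1 n))) B (fun k => Hb c (or_introl erefl) _).
  exists (fun n => phi1 (phi2 n)); split; first exact: sincr_comp.
  move=> c' [<-|Hc']; first by exists l.
  have [l' Hl'] := H1 c' Hc'; exists l'.
  exact: (cv_sub (fun n => c' (u (phi1 n)))).
Qed.

Lemma squeeze0 (a b : nat -> R) : (forall n, 0 <= a n <= b n) -> Un_cv b 0 -> Un_cv a 0.
Proof.
move=> H Hb eps He; have [K HK] := Hb eps He; exists K => n Hn.
have := HK n Hn; have := H n; rewrite /R_dist !Rminus_0_r => -[H1 H2].
by rewrite (Rabs_pos_eq (a n)) // => H3; have := Rle_abs (b n); lra.
Qed.

Section Compactness.
Context {N : nat} {nb : 'I_N -> nat}.

Lemma coords_cv_norm (v : nat -> bvec N nb) (l : bvec N nb) :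
  (forall i j, Un_cv (fun n => v n i j) (l i j)) ->
  Un_cv (fun n => bnorm (bsub (v n) l)) 0.
Proof.
move=> Hx.
apply: (squeeze0 _ (fun n => sumR (fun i => sumR (fun j => Rabs (v n i j - l i j))))).
- move=> n; split; first exact: bnorm_pos.
  apply: Rle_trans (bnorm_le_sum _) _; apply: sumR_le => i; exact: norm1_le_sum.
- have E0 : sumR (fun i : 'I_N => sumR (fun j : 'I_(nb i) => 0)) = 0.
    by rewrite (sumR_ext _ (fun _ => 0)); [exact: sumR_0 | move=> i; exact: sumR_0].
  rewrite -E0; apply: sumR_cv => i; apply: sumR_cv => j.
  move=> eps He; have [K HK] := Hx i j eps He; exists K => n Hn.
  by have := HK n Hn; rewrite /R_dist Rminus_0_r Rabs_Rabsolu.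
Qed.

Lemma BW_bvec (u : nat -> bvec N nb) B : (forall k, bnorm (u k) <= B) ->
  exists xbar, forall eps, 0 < eps -> forall K,
    exists k, (K <= k)%nat /\ bnorm (bsub (u k) xbar) < eps.
Proof.
move=> Hb.
set cs := List.flat_map (fun i => List.map (fun j => fun y : bvec N nb => y i j)
  (enum 'I_(nb i))) (enum 'I_N).
have Hin : forall i j, List.In (fun y : bvec N nb => y i j) cs.
  move=> i j; apply/List.in_flat_map; exists i.
  split; first by apply: In_of_mem; rewrite mem_enum.
  apply: (List.in_map (fun j : 'I_(nb i) => fun y : bvec N nb => y i j)).
  by apply: In_of_mem; rewrite mem_enum.
have Hcb : forall c, List.In c cs -> forall k, Rabs (c (u k)) <= B.
  move=> c /List.in_flat_map [i [_ /List.in_map_iff [j [<- _]]]] k.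
  apply: Rle_trans (abs_le_norm1 (u k i) j) _.
  by apply: Rle_trans (norm1_le_bnorm (u k) i) _; exact: Hb.
have [phi [Hphi Hl]] := BW_list u B cs Hcb.
have Hl2 : forall i j, exists l, Un_cv (fun n => u (phi n) i j) l
  by move=> i j; exact: Hl _ (Hin i j).
pose xbar : bvec N nb :=
  fun i j => proj1_sig (constructive_indefinite_description _ (Hl2 i j)).
have Hcv := coords_cv_norm (fun n => u (phi n)) xbar
  (fun i j => proj2_sig (constructive_indefinite_description _ (Hl2 i j))).
exists xbar => eps He K; have [n0 Hn0] := Hcv eps He.
exists (phi (n0 + K)%nat); split; first by have := sincr_ge phi Hphi (n0 + K)%nat; lia.
have := Hn0 (n0 + K)%nat ltac:(apply/leP; lia); rewrite /R_dist Rminus_0_r.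
by rewrite Rabs_pos_eq //; exact: bnorm_pos.
Qed.

End Compactness.

Lemma le_eps A B : (forall eps, 0 < eps -> A <= B + eps) -> A <= B.
Proof. by move=> H; apply: Rnot_lt_le => Hc; have := H ((A - B) / 2) ltac:(lra); lra. Qed.

Lemma pow_dec r m n : 0 <= r <= 1 -> (m <= n)%nat -> r ^ n <= r ^ m.
Proof.
move=> Hr Hmn; have -> : n = (m + (n - m))%nat by lia.
rewrite pow_add; have := pow_le r m (proj1 Hr).
have : r ^ (n - m) <= 1 by have := pow_incr r 1 (n - m) Hr; rewrite pow1.
by have := pow_le r (n - m) (proj1 Hr); nra.
Qed.

Lemma sqrt_pow a n : 0 <= a -> sqrt (a ^ n) = sqrt a ^ n.
Proof.
move=> Ha; elim: n => [|n IH] /=; first exact: sqrt_1.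
by rewrite sqrt_mult //; [rewrite IH | exact: pow_le].
Qed.

Definition wsum (g : nat -> R) (k m : nat) := sumR (fun t : 'I_m => g (k + t)%nat).

Lemma wsum_0 g k : wsum g k 0 = 0.
Proof. by rewrite /wsum /sumR big_ord0. Qed.

Lemma wsum_S g k m : wsum g k (S m) = wsum g k m + g (k + m)%nat.
Proof. by rewrite /wsum /sumR big_ord_recr. Qed.

Lemma wsum_shift g k m : wsum g k (S m) = g k + wsum g (S k) m.
Proof.
rewrite /wsum /sumR big_ord_recl /= addn0; congr (_ + _).
by apply: eq_bigr => i _; rewrite /bump /= add1n addSn addnS.
Qed.

Lemma wsum_split g k a b : wsum g k (a + b)%nat = wsum g k a + wsum g (k + a)%nat b.
Proof.
elim: b => [|b IH]; first by rewrite addn0 wsum_0; lra.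
by rewrite addnS !wsum_S IH addnA; lra.
Qed.

Lemma wsum_nonneg g k m : (forall s, 0 <= g s) -> 0 <= wsum g k m.
Proof. by move=> H; apply: sumR_nonneg => t; exact: H. Qed.

Lemma wsum_mono g k m m' : (forall s, 0 <= g s) -> (m <= m')%nat -> wsum g k m <= wsum g k m'.
Proof.
move=> H; elim: m' => [|m' IH] Hm.
  have -> : m = 0%nat by lia.
  exact: Rle_refl.
case: (ltngtP m (S m')) => Hc; [|lia|by rewrite Hc; lra].
by rewrite wsum_S; have := H (k + m')%nat; have := IH ltac:(lia); lra.
Qed.

Lemma wsum_le g h k m : (forall s, g s <= h s) -> wsum g k m <= wsum h k m.
Proof. by move=> H; apply: sumR_le => t; exact: H. Qed.

Lemma wsum_le_in g h k m :
  (forall t, (t < m)%nat -> g (k + t)%nat <= h (k + t)%nat) -> wsum g k m <= wsum h k m.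
Proof. by move=> H; apply: sumR_le => t; apply: H; exact: ltn_ord. Qed.

Lemma telescope (p : nat -> R) T k m :
  wsum (fun s => p s - p (s + T)%nat) k m = wsum p k T - wsum p (k + m)%nat T.
Proof.
elim: m => [|m IH]; first by rewrite wsum_0 addn0; lra.
rewrite wsum_S IH addnS.
by have E1 := wsum_S p (k + m)%nat T; have E2 := wsum_shift p (k + m)%nat T; lra.
Qed.

Lemma telescope_le (p : nat -> R) T k m :
  (forall s, 0 <= p s) -> (forall a b, (a <= b)%nat -> p b <= p a) ->
  wsum (fun s => p s - p (s + T)%nat) k m <= INR T * p k.
Proof.
move=> H0 Hm; rewrite telescope.
have : wsum p k T <= INR T * p k
  by rewrite /wsum; apply: sumR_le_const => t; apply: Hm; exact: leq_addr.
by have := wsum_nonneg p (k + m)%nat T H0; lra.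
Qed.

Lemma geom_wsum c r s m : 0 <= c -> 0 <= r < 1 ->
  wsum (fun t => c * r ^ t) s m <= c * r ^ s / (1 - r).
Proof.
move=> Hc Hr.
have E : forall m, wsum (fun t => c * r ^ t) s m = c * r ^ s * (1 - r ^ m) / (1 - r).
  elim => [|m' IH]; first by rewrite wsum_0 /=; field; lra.
  by rewrite wsum_S IH pow_add /=; field; lra.
rewrite E; have := pow_le r m (proj1 Hr); have := pow_le r s (proj1 Hr).
move=> H1 H2; rewrite /Rdiv; apply: Rmult_le_compat_r.
  by apply: Rlt_le; apply: Rinv_0_lt_compat; lra.
by have := Rmult_le_pos c (r ^ s) Hc H1; nra.
Qed.

Lemma Rpow_pos x y : 0 < Rpower x y.
Proof. exact: exp_pos. Qed.

Lemma Rpow_1_l a : Rpower 1 a = 1.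
Proof. by rewrite /Rpower ln_1 Rmult_0_r exp_0. Qed.

Lemma Rpow_dec_exp x y z : 0 < x <= 1 -> y <= z -> Rpower x z <= Rpower x y.
Proof.
move=> [Hx Hx1] Hyz; rewrite /Rpower.
have Hl : ln x <= 0 by rewrite -ln_1; apply: ln_le; lra.
destruct (Req_dec (z * ln x) (y * ln x)) as [E|E]; first by rewrite E; lra.
by apply: Rlt_le; apply: exp_increasing; nra.
Qed.

Lemma Rpow_lt1 x y : 0 < x < 1 -> 0 < y -> Rpower x y < 1.
Proof.
move=> [Hx Hx1] Hy; rewrite /Rpower -exp_0; apply: exp_increasing.
have : ln x < 0 by rewrite -ln_1; apply: ln_increasing; lra.
nra.
Qed.

Lemma Rpow_inv x a : 0 < x -> 0 < a -> Rpower (Rpower x a) (/ a) = x.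
Proof. by move=> Hx Ha; rewrite Rpower_mult Rinv_r; [exact: Rpower_1 | lra]. Qed.

Lemma Rpow_2 r : 0 < r -> r * r = Rpower r 2.
Proof.
move=> Hr; have := Rpower_pow 2 r Hr.
have -> : INR 2 = 2 by simpl; lra.
by move=> ->; ring.
Qed.

(** The power t^a extended by 0 to t <= 0, so that it can be applied to
    nonnegative gaps that may vanish. *)
Definition pw (t a : R) := if Rle_dec t 0 then 0 else Rpower t a.

Lemma pw_pos t a : 0 < t -> pw t a = Rpower t a.
Proof. by move=> H; rewrite /pw; destruct (Rle_dec t 0); [lra | reflexivity]. Qed.

Lemma pw_nonpos t a : t <= 0 -> pw t a = 0.
Proof. by move=> H; rewrite /pw; destruct (Rle_dec t 0). Qed.

Lemma pw_nneg t a : 0 <= pw t a.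
Proof.
rewrite /pw; destruct (Rle_dec t 0); [exact: Rle_refl | exact: Rlt_le (Rpow_pos _ _)].
Qed.

Lemma pw_mono a s t : 0 <= a -> s <= t -> pw s a <= pw t a.
Proof.
move=> Ha Hst; destruct (Rle_lt_dec s 0) as [H|H].
- by rewrite pw_nonpos //; exact: pw_nneg.
- by rewrite !pw_pos //; [apply: Rle_Rpower_l => //; lra | lra].
Qed.

Lemma pw_small a : 0 < a -> forall eps, 0 < eps ->
  exists del, 0 < del /\ forall t, t < del -> pw t a < eps.
Proof.
move=> Ha eps He; exists (Rpower eps (/ a)); split; first exact: Rpow_pos.
move=> t Ht; destruct (Rle_lt_dec t 0) as [H|H]; first by rewrite pw_nonpos.
rewrite pw_pos //.
have := Rlt_Rpower_l t (Rpower eps (/ a)) a Ha (conj H Ht).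
by rewrite Rpower_mult Rinv_l; [rewrite Rpower_1 | lra].
Qed.

Lemma young_t t a : 0 < t <= 1 -> 0 < a <= 1 -> Rpower t a - a * t <= 1 - a.
Proof.
move=> [Ht Ht1] [Ha Ha1].
destruct (Req_dec t 1) as [E|E]; first by rewrite E Rpow_1_l; lra.
have Hd : forall c, t <= c <= 1 ->
    derivable_pt_lim (fun c => Rpower c a - a * c) c (a * Rpower c (a - 1) - a).
  move=> c Hc; apply: (derivable_pt_lim_minus (fun c => Rpower c a) (fun c => a * c)).
  - by apply: derivable_pt_lim_power; lra.
  - by apply/is_derive_Reals; auto_derive => //; ring.
have [c [Ec Hc]] := MVT_cor2 _ _ t 1 ltac:(lra) Hd.
rewrite Rpow_1_l in Ec.
have : Rpower c 0 <= Rpower c (a - 1) by apply: Rpow_dec_exp; lra.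
rewrite Rpower_O; last lra; move=> H1.
have : 0 <= (a * Rpower c (a - 1) - a) * (1 - t) by apply: Rmult_le_pos; nra.
lra.
Qed.

Lemma pw_concave a s t : 0 < a <= 1 -> 0 <= s <= t -> 0 < t ->
  a * Rpower t (a - 1) * (t - s) <= pw t a - pw s a.
Proof.
move=> Ha Hs Ht; rewrite (pw_pos t) //.
have Hta : Rpower t a = Rpower t (a - 1) * t
  by rewrite -{3}(Rpower_1 t) // -Rpower_plus; f_equal; ring.
have Hp := Rpow_pos t (a - 1).
destruct (Req_dec s 0) as [E|E].
- rewrite E (pw_nonpos 0 a (Rle_refl 0)) Hta.
  have : 0 <= (1 - a) * (Rpower t (a - 1) * t) by apply: Rmult_le_pos; nra.
  nra.
- have Hs0 : 0 < s by lra.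
  rewrite (pw_pos s a Hs0).
  have Hst : 0 < s / t <= 1.
    split; first by apply: Rdiv_lt_0_compat; lra.
    by apply: (Rmult_le_reg_r t) => //; rewrite /Rdiv Rmult_assoc Rinv_l; lra.
  have Y := young_t (s / t) a Hst Ha.
  have Es : Rpower s a = Rpower t a * Rpower (s / t) a
    by rewrite Rpower_mult_distr //; [f_equal; field; lra | lra].
  rewrite Es Hta.
  have -> : a * Rpower t (a - 1) * (t - s) = Rpower t (a - 1) * t * (a * (1 - s / t))
    by field; lra.
  have Hpt : 0 < Rpower t (a - 1) * t by nra.
  have H : a * (1 - s / t) <= 1 - Rpower (s / t) a by lra.
  by have := Rmult_le_compat_l _ _ _ (Rlt_le _ _ Hpt) H; lra.
Qed.

(** One step of the KL finite-length argument, in pure real terms: if the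
    decrease e - e' dominates S^2 / c1 and e^(1-a) <= c2 S, then by concavity
    of t^a the length S is bounded by the decrease of e^a. *)
Lemma concave_length_step a c1 c2 S e e' : 0 < a <= 1 -> 0 < c1 -> 0 < c2 -> 0 <= S ->
  0 <= e' <= e -> S * S <= c1 * (e - e') -> (0 < e -> Rpower e (1 - a) <= c2 * S) ->
  S <= c1 * c2 / a * (pw e a - pw e' a).
Proof.
move=> Ha Hc1 Hc2 HS He' Hdec HKL.
have Hdiff : 0 <= pw e a - pw e' a by have := pw_mono a _ _ (Rlt_le _ _ (proj1 Ha)) (proj2 He'); lra.
have Hcoef : 0 < c1 * c2 / a by apply: Rdiv_lt_0_compat; [nra | lra].
destruct (Req_dec S 0) as [E|E]; first by rewrite E; nra.
have HSp : 0 < S by lra.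
have He : 0 < e by nra.
have HP := HKL He; have HPp := Rpow_pos e (1 - a).
have Cc := pw_concave a e' e Ha He' He.
have Ea : a - 1 = - (1 - a) by ring.
rewrite Ea Rpower_Ropp in Cc.
have H1 : a * (e - e') <= (pw e a - pw e' a) * Rpower e (1 - a).
  apply: (Rmult_le_reg_r (/ Rpower e (1 - a))); first exact: Rinv_0_lt_compat.
  have -> : (pw e a - pw e' a) * Rpower e (1 - a) * / Rpower e (1 - a) = pw e a - pw e' a
    by field; lra.
  lra.
have H2 : a * (S * S) <= c1 * c2 * S * (pw e a - pw e' a).
  have : a * (S * S) <= c1 * (a * (e - e')) by nra.
  have : (pw e a - pw e' a) * Rpower e (1 - a) <= (pw e a - pw e' a) * (c2 * S)
    by apply: Rmult_le_compat_l.
  nra.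
have H3 : a * S <= c1 * c2 * (pw e a - pw e' a).
  by apply: (Rmult_le_reg_r S) => //; nra.
apply: (Rmult_le_reg_l a); first lra.
rewrite (_ : a * (c1 * c2 / a * (pw e a - pw e' a)) = c1 * c2 * (pw e a - pw e' a)) //.
by field; lra.
Qed.

Lemma windows_geometric (e : nat -> R) T k0 q : (1 <= T)%nat -> 0 < q < 1 ->
  (forall s, 0 <= e s) -> (forall m n, (m <= n)%nat -> e n <= e m) ->
  (forall s, (k0 <= s)%nat -> e (s + T)%nat <= q * e s) ->
  exists C r, 0 <= C /\ 0 < r < 1 /\ forall s, e s <= C * r ^ s.
Proof.
move=> HT Hq He Hmono Hcontr.
have HTp : 0 < INR T by apply: lt_0_INR; apply/ltP.
set r := Rpower q (/ INR T).
have Hr : 0 < r < 1.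
  split; first exact: Rpow_pos.
  by apply: Rpow_lt1; [lra | apply: Rinv_0_lt_compat].
have HrT : r ^ T = q.
  by rewrite -Rpower_pow; [rewrite /r Rpower_mult Rinv_l; [apply: Rpower_1; lra | lra] | lra].
have Hpw0 : 0 < r ^ (k0 + T) by apply: pow_lt; lra.
exists (e 0%nat / r ^ (k0 + T)), r; split; last split => //.
  by apply: Rmult_le_pos; [exact: He | apply: Rlt_le; apply: Rinv_0_lt_compat].
elim/ltn_ind => s IH.
case: (leqP (k0 + T) s) => Hs.
- have -> : s = ((s - T) + T)%nat by lia.
  have := Hcontr (s - T)%nat ltac:(lia); have := IH (s - T)%nat ltac:(lia).
  rewrite (pow_add r (s - T)) HrT; have := He (s - T)%nat => P0 H1 H2.
  have : q * e (s - T)%nat <= q * (e 0%nat / r ^ (k0 + T) * r ^ (s - T))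
    by apply: Rmult_le_compat_l; lra.
  lra.
- have H1 : e s <= e 0%nat by apply: Hmono.
  have H2 : r ^ (k0 + T) <= r ^ s by apply: pow_dec; [lra | lia].
  apply: Rle_trans H1 _.
  have -> : e 0%nat / r ^ (k0 + T) * r ^ s = e 0%nat * (r ^ s / r ^ (k0 + T))
    by field; lra.
  have : 1 <= r ^ s / r ^ (k0 + T).
    by apply: (Rmult_le_reg_r (r ^ (k0 + T))) => //; rewrite /Rdiv Rmult_assoc Rinv_l; lra.
  by have := He 0%nat; nra.
Qed.

(** ** The block forward-backward model *)

Section Problem.
Variable N : nat.
Hypothesis HN : (0 < N)%nat.
Variable nb : 'I_N -> nat.
Variable f : forall i : 'I_N, blk (nb i) -> R.
Variable gf : forall i : 'I_N, blk (nb i) -> blk (nb i).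
Variable L : 'I_N -> R.
Hypothesis Hgrad : forall i, is_gradient (f i) (gf i).
Hypothesis HL : forall i, 0 <= L i.
Hypothesis HLip : forall i, lipschitz_grad (gf i) (L i).
Variable domG : bvec N nb -> Prop.
Variable G : bvec N nb -> R.
Hypothesis HGconvex : convex_ext domG G.
Variable gamma : 'I_N -> R.
Hypothesis Hgamma : forall i, 0 < gamma i /\ gamma i * L i < INR N.

Definition winv : 'I_N -> R := fun i => / gamma i.
Definition Phi (x : bvec N nb) := Fsum f x + G x.

Lemma INRN_pos : 0 < INR N.
Proof. by apply: lt_0_INR; apply/ltP. Qed.

Lemma invN_pos : 0 < / INR N.
Proof. exact: Rinv_0_lt_compat INRN_pos. Qed.

Lemma invN_le1 : / INR N <= 1.
Proof.
have H : 1 <= INR N by apply: (le_INR 1); apply/leP.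
by rewrite -Rinv_1; apply: Rinv_le_contravar; lra.
Qed.

Lemma winv_pos i : 0 < winv i.
Proof. exact: Rinv_0_lt_compat (proj1 (Hgamma i)). Qed.
Lemma winv_nneg i : 0 <= winv i.
Proof. exact: Rlt_le (winv_pos i). Qed.
Lemma winv_gamma i : winv i * gamma i = 1.
Proof. by rewrite /winv Rinv_l //; have := proj1 (Hgamma i); lra. Qed.

Definition Lmax := 1 + sumR (fun i => Rabs (L i)).
Definition gmax := 1 + sumR (fun i => Rabs (gamma i)).
Definition wmax := 1 + sumR (fun i => Rabs (winv i)).
Definition wmin := / gmax.

Lemma Lmax_pos : 0 < Lmax.        Proof. exact: proj1 (sumR_majorant L). Qed.
Lemma Lmax_ge i : L i <= Lmax.    Proof. exact: proj2 (sumR_majorant L) i. Qed.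
Lemma gmax_pos : 0 < gmax.        Proof. exact: proj1 (sumR_majorant gamma). Qed.
Lemma gmax_ge i : gamma i <= gmax. Proof. exact: proj2 (sumR_majorant gamma) i. Qed.
Lemma wmax_pos : 0 < wmax.        Proof. exact: proj1 (sumR_majorant winv). Qed.
Lemma wmax_ge i : winv i <= wmax. Proof. exact: proj2 (sumR_majorant winv) i. Qed.
Lemma wmin_pos : 0 < wmin.        Proof. exact: Rinv_0_lt_compat gmax_pos. Qed.
Lemma wmin_le i : wmin <= winv i.
Proof. by apply: Rinv_le_contravar; [exact: proj1 (Hgamma i) | exact: gmax_ge]. Qed.

(** The curvature margin 1/gamma_i - L_i/N > 0 of block i (halved), which is
    where the step-size condition gamma_i < N / L_i enters, and its minimum. *)
Definition dcoef i := / 2 * (winv i - L i / INR N).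
Lemma dcoef_pos i : 0 < dcoef i.
Proof.
rewrite /dcoef /winv; have [Hg HgL] := Hgamma i; have HNp := INRN_pos.
have : L i / INR N < / gamma i.
  apply: (Rmult_lt_reg_r (gamma i * INR N)); first nra.
  have -> : L i / INR N * (gamma i * INR N) = gamma i * L i by field; lra.
  have -> : / gamma i * (gamma i * INR N) = INR N by field; lra.
  lra.
lra.
Qed.

Definition amin := / (1 + sumR (fun i => / dcoef i)).
Lemma amin_pos : 0 < amin.
Proof.
apply: Rinv_0_lt_compat.
have := sumR_nonneg (fun i => / dcoef i) (fun i => Rlt_le _ _ (Rinv_0_lt_compat _ (dcoef_pos i))).
lra.
Qed.
Lemma amin_le i : amin <= dcoef i.
Proof.
rewrite /amin -(Rinv_inv (dcoef i)); apply: Rinv_le_contravar.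
  exact: Rinv_0_lt_compat (dcoef_pos i).
have := sumR_single (fun i => / dcoef i) i
  (fun i => Rlt_le _ _ (Rinv_0_lt_compat _ (dcoef_pos i))).
lra.
Qed.

Definition Amax := / 2 * (wmax + Lmax).
Lemma Amax_pos : 0 < Amax.
Proof. by rewrite /Amax; have := wmax_pos; have := Lmax_pos; lra. Qed.
Lemma Amax_ge i : / 2 * (winv i + L i / INR N) <= Amax.
Proof.
rewrite /Amax; have := wmax_ge i; have := Lmax_ge i.
have : L i / INR N <= L i
  by rewrite /Rdiv; have := Rmult_le_compat_l (L i) _ _ (HL i) invN_le1; lra.
lra.
Qed.

Lemma Fsum_expand y z :
  Rabs (Fsum f y - Fsum f z - bdot (gradF gf z) (bsub y z))
    <= Lmax / 2 * bdot (bsub y z) (bsub y z).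
Proof.
have E : Fsum f y - Fsum f z - bdot (gradF gf z) (bsub y z) =
  sumR (fun i => / INR N * (f i (y i) - f i (z i) - dot1 (gf i (z i)) (sub1 (y i) (z i)))).
  rewrite /Fsum /bdot sumR_scal -Rmult_minus_distr_l -sumR_sub -sumR_scal -sumR_sub.
  rewrite -sumR_scal; apply: sumR_ext => i.
  change (dot1 (gradF gf z i) (bsub y z i))
    with (dot1 (scal1 (/ INR N) (gf i (z i))) (sub1 (y i) (z i))).
  by rewrite dot1_scal_l; ring.
rewrite E; apply: Rle_trans (sumR_abs _) _.
rewrite /bdot -sumR_scal; apply: sumR_le => i.
rewrite Rabs_mult Rabs_pos_eq; last exact: Rlt_le invN_pos.
have D := descent_lemma (f i) (gf i) (L i) (z i) (y i) (Hgrad i) (HLip i) (HL i).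
change (bsub y z i) with (sub1 (y i) (z i)).
have P := dot1_pos (sub1 (y i) (z i)).
have := Lmax_ge i; have := invN_le1; have := invN_pos.
have := Rabs_pos (f i (y i) - f i (z i) - dot1 (gf i (z i)) (sub1 (y i) (z i))).
have := HL i; nra.
Qed.

Lemma Fsum_sum z : Fsum f z = sumR (fun i => / INR N * f i (z i)).
Proof. by rewrite /Fsum sumR_scal. Qed.

Lemma F_cont (b : bvec N nb) : forall eps, 0 < eps -> exists del, 0 < del /\
  forall a, bnorm (bsub a b) < del -> Rabs (Fsum f a - Fsum f b) < eps.
Proof.
move=> eps He; set g := bnorm (gradF gf b); have Hg : 0 <= g := bnorm_pos _.
have HLm := Lmax_pos.
exists (Rmin 1 (eps / (g + Lmax + 1))); split.
  by apply: Rmin_pos; [lra | apply: Rdiv_lt_0_compat; lra].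
move=> a Ha.
have Hd1 := Rlt_le_trans _ _ _ Ha (Rmin_l _ _).
have Hd2 := Rlt_le_trans _ _ _ Ha (Rmin_r _ _).
set d := bnorm (bsub a b) in Hd1 Hd2; have Hd : 0 <= d := bnorm_pos (bsub a b).
have FE := Fsum_expand a b; have CS := bdot_CS (gradF gf b) (bsub a b).
rewrite -bnorm_sq in FE.
have Hgd : Rabs (Fsum f a - Fsum f b) <= g * d + Lmax / 2 * (d * d).
  have := Rabs_triang (Fsum f a - Fsum f b - bdot (gradF gf b) (bsub a b))
    (bdot (gradF gf b) (bsub a b)).
  have -> : Fsum f a - Fsum f b - bdot (gradF gf b) (bsub a b)
    + bdot (gradF gf b) (bsub a b) = Fsum f a - Fsum f b by ring.
  by rewrite -/d -/g in FE CS; lra.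
have Hdeps : d * (g + Lmax + 1) < eps.
  have := Rmult_lt_compat_r (g + Lmax + 1) _ _ ltac:(lra) Hd2.
  by rewrite /Rdiv Rmult_assoc Rinv_l; lra.
have Hdd : d * d <= d by have := Rmult_le_compat_l d _ _ Hd (Rlt_le _ _ Hd1); lra.
have := Rmult_le_compat_l Lmax _ _ (Rlt_le _ _ HLm) Hdd.
have := Rmult_le_pos Lmax d (Rlt_le _ _ HLm) Hd.
lra.
Qed.

Lemma gradF_lip x y : bnorm (bsub (gradF gf x) (gradF gf y)) <= Lmax * bnorm (bsub x y).
Proof.
apply: bnorm_blockwise; first exact: Rlt_le Lmax_pos.
move=> i; have -> : bsub (gradF gf x) (gradF gf y) i =
    scal1 (/ INR N) (sub1 (gf i (x i)) (gf i (y i)))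
  by apply: functional_extensionality => j; rewrite /bsub /gradF /scal1 /sub1; ring.
rewrite norm1_scal Rabs_pos_eq; last exact: Rlt_le invN_pos.
have := HLip i (x i) (y i); change (bsub x y i) with (sub1 (x i) (y i)).
have := norm1_pos (sub1 (x i) (y i)); have := norm1_pos (sub1 (gf i (x i)) (gf i (y i))).
have := Lmax_ge i; have := invN_le1; have := invN_pos; have := HL i.
nra.
Qed.

Definition qblock i (xi yi : blk (nb i)) : R :=
  / INR N * (f i xi + dot1 (gf i xi) (sub1 yi xi))
  + / 2 * winv i * dot1 (sub1 yi xi) (sub1 yi xi).
Definition model (x y : bvec N nb) : R := G y + sumR (fun i => qblock i (x i) (y i)).
Definition fwd (x : bvec N nb) : bvec N nb := fun i j => x i j - gamma i * gradF gf x i j.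

(** Completing the square: q(x, .) differs from the prox objective
    G(.) + ||. - u(x)||_V^2 / 2 by a term independent of y. *)
Lemma qblock_square i xi yi :
  let ui := fun j => xi j - gamma i * (/ INR N * gf i xi j) in
  qblock i xi yi = / INR N * f i xi + / 2 * winv i * dot1 (sub1 yi ui) (sub1 yi ui)
     - / 2 * winv i * dot1 (sub1 xi ui) (sub1 xi ui).
Proof.
move=> ui; rewrite /qblock /dot1 /sub1 /ui.
have Hg := proj1 (Hgamma i); have Hn := INRN_pos.
set S1 := sumR _; set S2 := sumR _; set S3 := sumR _; set S4 := sumR _.
suff : / INR N * S1 + / 2 * winv i * S2 = / 2 * winv i * S3 - / 2 * winv i * S4 by lra.
rewrite /S1 /S2 /S3 /S4 -!sumR_scal -sumR_add -sumR_sub.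
by apply: sumR_ext => j; rewrite /winv; field; lra.
Qed.

Lemma model_square x y :
  model x y = Fsum f x + G y + / 2 * wnorm2 winv (bsub y (fwd x))
    - / 2 * wnorm2 winv (bsub x (fwd x)).
Proof.
rewrite /model /Fsum /wnorm2.
rewrite (sumR_ext _ (fun i => / INR N * f i (x i)
    + / 2 * winv i * dot1 (bsub y (fwd x) i) (bsub y (fwd x) i)
    - / 2 * winv i * dot1 (bsub x (fwd x) i) (bsub x (fwd x) i)));
  last by move=> i; exact: qblock_square.
rewrite sumR_sub sumR_add -!sumR_scal.
rewrite (sumR_ext (fun i => / 2 * winv i * _)
  (fun i => / 2 * (winv i * dot1 (bsub y (fwd x) i) (bsub y (fwd x) i))));
  last by move=> i; ring.
rewrite (sumR_ext (fun i => / 2 * winv i * _)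
  (fun i => / 2 * (winv i * dot1 (bsub x (fwd x) i) (bsub x (fwd x) i))));
  last by move=> i; ring.
ring.
Qed.

Lemma in_T_prox x z : in_T domG G gf gamma x z -> in_prox domG G winv (fwd x) z.
Proof. by []. Qed.

Lemma model_min x z y : in_T domG G gf gamma x z -> domG y -> model x z <= model x y.
Proof.
move=> /in_T_prox [Hz Hm] Hy; rewrite !model_square.
by have := Hm y Hy; lra.
Qed.

Lemma qblock_self i yi : qblock i yi yi = / INR N * f i yi.
Proof. by rewrite /qblock sub1_self dot1_scal_r dot1_scal_l; ring. Qed.

Lemma qblock_lower i xi zi :
  / INR N * f i zi + dcoef i * dot1 (sub1 zi xi) (sub1 zi xi) <= qblock i xi zi.
Proof.
have D := descent_lemma (f i) (gf i) (L i) xi zi (Hgrad i) (HLip i) (HL i).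
move: D => /Rabs_le_between D; rewrite /qblock /dcoef.
have Hn := invN_pos; have P := dot1_pos (sub1 zi xi).
have -> : / 2 * (winv i - L i / INR N) * dot1 (sub1 zi xi) (sub1 zi xi) =
   / 2 * winv i * dot1 (sub1 zi xi) (sub1 zi xi)
   - / INR N * (L i / 2 * dot1 (sub1 zi xi) (sub1 zi xi))
  by field; have := INRN_pos; lra.
nra.
Qed.

Lemma qblock_upper i xi zi :
  qblock i xi zi <= / INR N * f i zi + Amax * dot1 (sub1 zi xi) (sub1 zi xi).
Proof.
have D := descent_lemma (f i) (gf i) (L i) xi zi (Hgrad i) (HLip i) (HL i).
move: D => /Rabs_le_between D; rewrite /qblock.
have Hn := invN_pos; have P := dot1_pos (sub1 zi xi).
have : / 2 * (winv i + L i / INR N) * dot1 (sub1 zi xi) (sub1 zi xi)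
    <= Amax * dot1 (sub1 zi xi) (sub1 zi xi)
  by apply: Rmult_le_compat_r => //; exact: Amax_ge.
have -> : / 2 * (winv i + L i / INR N) * dot1 (sub1 zi xi) (sub1 zi xi) =
   / 2 * winv i * dot1 (sub1 zi xi) (sub1 zi xi)
   + / INR N * (L i / 2 * dot1 (sub1 zi xi) (sub1 zi xi))
  by field; have := INRN_pos; lra.
nra.
Qed.

Lemma model_lower x z : Phi z + amin * bdot (bsub z x) (bsub z x) <= model x z.
Proof.
rewrite /model /Phi Fsum_sum /bdot -sumR_scal.
suff : sumR (fun i => / INR N * f i (z i))
    + sumR (fun i => amin * dot1 (bsub z x i) (bsub z x i))
    <= sumR (fun i => qblock i (x i) (z i)) by lra.
rewrite -sumR_add; apply: sumR_le => i; apply: Rle_trans (qblock_lower i (x i) (z i)).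
change (bsub z x i) with (sub1 (z i) (x i)); apply: Rplus_le_compat_l.
by apply: Rmult_le_compat_r; [exact: dot1_pos | exact: amin_le].
Qed.

Lemma model_upper x z : model x z <= Phi z + Amax * bdot (bsub z x) (bsub z x).
Proof.
rewrite /model /Phi Fsum_sum /bdot -sumR_scal.
suff : sumR (fun i => qblock i (x i) (z i)) <= sumR (fun i => / INR N * f i (z i))
    + sumR (fun i => Amax * dot1 (bsub z x i) (bsub z x i)) by lra.
by rewrite -sumR_add; apply: sumR_le => i; exact: qblock_upper.
Qed.

Definition subgrad_at (x z : bvec N nb) : bvec N nb :=
  fun i j => winv i * (x i j - z i j) - gradF gf x i j + gradF gf z i j.

Lemma subgrad x z : in_T domG G gf gamma x z -> regular_subdiff domG Phi z (subgrad_at x z).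
Proof.
move=> HT; split; first exact: (proj1 HT).
move=> eps Heps; have HLm := Lmax_pos.
exists (2 * eps / Lmax); split; first by apply: Rdiv_lt_0_compat; lra.
move=> y Hy Hyz.
have VI := prox_VI domG G winv winv_nneg HGconvex (fwd x) z y (in_T_prox x z HT) Hy.
set v' : bvec N nb := fun i j => winv i * (x i j - z i j) - gradF gf x i j.
have E1 : wdot winv (bsub (fwd x) z) (bsub z y) = - bdot v' (bsub y z).
  rewrite /wdot /bdot -(Rmult_1_l (sumR (fun i => dot1 (v' i) (bsub y z i)))).
  rewrite Ropp_mult_distr_l -sumR_scal; apply: sumR_ext => i.
  rewrite /dot1 -!sumR_scal; apply: sumR_ext => j; rewrite /bsub /fwd /v'.
  have -> : winv i * ((x i j - gamma i * gradF gf x i j - z i j) * (z i j - y i j)) =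
     (winv i * (x i j - z i j) - (winv i * gamma i) * gradF gf x i j) * (z i j - y i j)
    by ring.
  by rewrite winv_gamma; ring.
have E2 : bdot (subgrad_at x z) (bsub y z) =
    bdot v' (bsub y z) + bdot (gradF gf z) (bsub y z).
  rewrite -bdot_add_l /bdot; apply: sumR_ext => i; rewrite /dot1.
  by apply: sumR_ext => j; rewrite /subgrad_at /v' /badd; ring.
move: (Fsum_expand y z) => /Rabs_le_between FE.
rewrite /Phi E2; rewrite E1 in VI.
have Hb := bnorm_pos (bsub y z).
have : Lmax / 2 * bdot (bsub y z) (bsub y z) <= eps * bnorm (bsub y z).
  rewrite -bnorm_sq.
  have : bnorm (bsub y z) * Lmax <= 2 * eps.
    have := Rmult_le_compat_r Lmax _ _ (Rlt_le _ _ HLm) (Rlt_le _ _ Hyz).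
    by rewrite /Rdiv Rmult_assoc Rinv_l; lra.
  nra.
lra.
Qed.

Definition Cv := wmax + Lmax.
Lemma subgrad_bound x0 z0 : bnorm (subgrad_at x0 z0) <= Cv * bnorm (bsub z0 x0).
Proof.
have -> : subgrad_at x0 z0 = badd (fun i j => winv i * (x0 i j - z0 i j))
    (bscal (-1) (bsub (gradF gf x0) (gradF gf z0)))
  by apply: bvec_ext => i j; rewrite /subgrad_at /badd /bscal /bsub; ring.
apply: Rle_trans (bnorm_add _ _) _; rewrite bnorm_scal Rabs_Ropp Rabs_R1 Rmult_1_l.
have A : bnorm (fun i j => winv i * (x0 i j - z0 i j)) <= wmax * bnorm (bsub x0 z0).
  apply: bnorm_blockwise; first exact: Rlt_le wmax_pos.
  move=> i; change (fun j => winv i * (x0 i j - z0 i j)) with (scal1 (winv i) (sub1 (x0 i) (z0 i))).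
  rewrite norm1_scal Rabs_pos_eq; last exact: winv_nneg.
  by apply: Rmult_le_compat_r; [exact: norm1_pos | exact: wmax_ge].
by have B := gradF_lip x0 z0; rewrite bnorm_opp in A B; rewrite /Cv; lra.
Qed.

Definition Cu := 1 + gmax * Lmax.
Lemma Cu_pos : 0 < Cu.
Proof. by rewrite /Cu; have := gmax_pos; have := Lmax_pos; nra. Qed.

Lemma fwd_lip x1 x2 : bnorm (bsub (fwd x1) (fwd x2)) <= Cu * bnorm (bsub x1 x2).
Proof.
set D := bsub (gradF gf x1) (gradF gf x2).
have -> : bsub (fwd x1) (fwd x2) = bsub (bsub x1 x2) (fun i j => gamma i * D i j)
  by apply: bvec_ext => i j; rewrite /bsub /fwd /D /bsub; ring.
apply: Rle_trans (bnorm_sub_le _ _) _.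
have : bnorm (fun i j => gamma i * D i j) <= gmax * bnorm D.
  apply: bnorm_blockwise; first exact: Rlt_le gmax_pos.
  move=> i; change (fun j => gamma i * D i j) with (scal1 (gamma i) (D i)).
  rewrite norm1_scal Rabs_pos_eq; last exact: Rlt_le (proj1 (Hgamma i)).
  by apply: Rmult_le_compat_r; [exact: norm1_pos | exact: gmax_ge].
have := gradF_lip x1 x2; rewrite -/D /Cu.
have := gmax_pos; have := bnorm_pos D; have := bnorm_pos (bsub x1 x2).
nra.
Qed.

Definition CT := sqrt wmax / sqrt wmin * Cu.
Lemma CT_pos : 0 < CT.
Proof.
rewrite /CT; have := sqrt_lt_R0 _ wmax_pos; have := sqrt_lt_R0 _ wmin_pos; have := Cu_pos.
by move=> *; apply: Rmult_lt_0_compat => //; apply: Rdiv_lt_0_compat.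
Qed.

Lemma T_lip x1 x2 z1 z2 : in_T domG G gf gamma x1 z1 -> in_T domG G gf gamma x2 z2 ->
  bnorm (bsub z1 z2) <= CT * bnorm (bsub x1 x2).
Proof.
move=> H1 H2.
have P := prox_nonexp domG G winv winv_nneg HGconvex _ _ _ _
  (in_T_prox _ _ H1) (in_T_prox _ _ H2).
have A := wn_le winv wmax (bsub (fwd x1) (fwd x2)) (Rlt_le _ _ wmax_pos) wmax_ge.
have B := wn_ge winv wmin (bsub z1 z2) (Rlt_le _ _ wmin_pos) wmin_le.
have U := fwd_lip x1 x2.
have Hm := sqrt_lt_R0 _ wmin_pos; have HM := sqrt_lt_R0 _ wmax_pos.
apply: (Rmult_le_reg_l (sqrt wmin)) => //.
have -> : sqrt wmin * (CT * bnorm (bsub x1 x2)) = sqrt wmax * (Cu * bnorm (bsub x1 x2))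
  by rewrite /CT; field; lra.
apply: Rle_trans B _; apply: Rle_trans P _; apply: Rle_trans A _.
by apply: Rmult_le_compat_l; lra.
Qed.

Lemma wnorm2_cont (b : bvec N nb) : forall eps, 0 < eps -> exists del, 0 < del /\
  forall a, bnorm (bsub a b) < del -> Rabs (wnorm2 winv a - wnorm2 winv b) < eps.
Proof.
move=> eps He; set s := sqrt wmax; have Hs : 0 < s := sqrt_lt_R0 _ wmax_pos.
set nb0 := wn winv b; have Hn : 0 <= nb0 := wn_pos _ _.
exists (Rmin 1 (eps / (s * (2 * nb0 + s) + 1))); split.
  by apply: Rmin_pos; [lra | apply: Rdiv_lt_0_compat; nra].
move=> a Ha.
have Hd1 := Rlt_le_trans _ _ _ Ha (Rmin_l _ _).
have Hd2 := Rlt_le_trans _ _ _ Ha (Rmin_r _ _).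
set d := bnorm (bsub a b) in Hd1 Hd2; have Hd : 0 <= d := bnorm_pos (bsub a b).
have W := wn_le winv wmax (bsub a b) (Rlt_le _ _ wmax_pos) wmax_ge.
rewrite -/s -/d in W.
have T1 := wn_tri winv winv_nneg a b bzero.
have T2 := wn_tri winv winv_nneg b a bzero.
rewrite !wn_sub0 // -/nb0 (wn_opp winv winv_nneg b a) in T1 T2.
have Ha0 := wn_pos winv a.
rewrite -(wn_sq winv winv_nneg a) -(wn_sq winv winv_nneg b) -/nb0.
have -> : wn winv a * wn winv a - nb0 * nb0 = (wn winv a - nb0) * (wn winv a + nb0) by ring.
rewrite Rabs_mult.
have A1 : Rabs (wn winv a - nb0) <= s * d by apply: Rabs_le; lra.
have A2 : Rabs (wn winv a + nb0) <= 2 * nb0 + s * d by rewrite Rabs_pos_eq; lra.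
have : Rabs (wn winv a - nb0) * Rabs (wn winv a + nb0) <= (s * d) * (2 * nb0 + s * d)
  by apply: Rmult_le_compat; try exact: Rabs_pos; lra.
have : d * (s * (2 * nb0 + s) + 1) < eps.
  have := Rmult_lt_compat_r (s * (2 * nb0 + s) + 1) _ _ ltac:(nra) Hd2.
  by rewrite /Rdiv Rmult_assoc Rinv_l; nra.
have P1 : 0 <= s * d by apply: Rmult_le_pos; lra.
have P2 : s * d * (s * d) <= s * d * s by apply: Rmult_le_compat_l; nra.
lra.
Qed.

(** ** Sufficient decrease of the merit sequence *)

Variables x z : nat -> bvec N nb.
Variable sel : nat -> 'I_N -> Prop.
Hypothesis Hz : forall k, in_T domG G gf gamma (x k) (z k).
Hypothesis Hupd : forall k i j,
  (sel (S k) i -> x (S k) i j = z k i j) /\ (~ sel (S k) i -> x (S k) i j = x k i j).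
Variable T : nat.
Hypothesis HT1 : (1 <= T)%nat.
Hypothesis Hcyc : forall k i, exists t, (1 <= t <= T)%nat /\ sel (k + t)%nat i.
Hypothesis Hargmin : argmin_nonempty domG Phi.

Definition merit k := model (x k) (z k).
Definition stepn k := bnorm (bsub (x (S k)) (x k)).
Definition res k := bnorm (bsub (z k) (x k)).

Lemma stepn_pos k : 0 <= stepn k.
Proof. exact: bnorm_pos. Qed.
Lemma res_pos k : 0 <= res k.
Proof. exact: bnorm_pos. Qed.

(** Blockwise, q_i(x^{k+1}_i, z^k_i) + amin ||x^{k+1}_i - x^k_i||^2 <= q_i(x^k_i, z^k_i):
    an updated block has x^{k+1}_i = z^k_i (lower descent bound), and the other
    blocks do not move.  Summing, and using that z^{k+1} minimises q(x^{k+1}, .),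
    gives the decrease. *)
Lemma merit_step k : merit (S k) <= merit k - amin * (stepn k * stepn k).
Proof.
rewrite /merit /stepn bnorm_sq.
apply: Rle_trans (model_min _ _ _ (Hz (S k)) (proj1 (Hz k))) _.
rewrite /model /bdot -sumR_scal.
suff : sumR (fun i => qblock i (x k.+1 i) (z k i)) <= sumR (fun i => qblock i (x k i) (z k i))
    - sumR (fun i => amin * dot1 (bsub (x k.+1) (x k) i) (bsub (x k.+1) (x k) i)) by lra.
rewrite -sumR_sub; apply: sumR_le => i.
change (bsub (x k.+1) (x k) i) with (sub1 (x k.+1 i) (x k i)).
destruct (classic (sel (S k) i)) as [Hs|Hs].
- have -> : x (S k) i = z k i
    by apply: functional_extensionality => j; exact: (proj1 (Hupd k i j) Hs).
  rewrite qblock_self; have := qblock_lower i (x k i) (z k i); have := amin_le i.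
  have := norm1_sq (sub1 (z k i) (x k i)); have := norm1_pos (sub1 (z k i) (x k i)).
  nra.
- have -> : x (S k) i = x k i
    by apply: functional_extensionality => j; exact: (proj2 (Hupd k i j) Hs).
  by rewrite sub1_self dot1_scal_l; lra.
Qed.

Lemma merit_lower k : Phi (z k) + amin * (res k * res k) <= merit k.
Proof. by rewrite /res bnorm_sq; exact: model_lower. Qed.
Lemma merit_upper k : merit k <= Phi (z k) + Amax * (res k * res k).
Proof. by rewrite /res bnorm_sq; exact: model_upper. Qed.

Lemma merit_decr : Un_decreasing merit.
Proof. by move=> k; have := merit_step k; have := stepn_pos k; have := amin_pos; nra. Qed.

Lemma merit_lb : has_lb merit.
Proof.
have [xm [_ Hm]] := Hargmin; exists (- Phi xm) => r [k ->]; rewrite /opp_seq.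
have := merit_lower k; have := Hm (z k) (proj1 (Hz k)); have := res_pos k.
by have := amin_pos; nra.
Qed.

Definition merit_lim := proj1_sig (decreasing_cv merit merit_decr merit_lb).
Lemma merit_cv : Un_cv merit merit_lim.
Proof. exact: proj2_sig (decreasing_cv merit merit_decr merit_lb). Qed.
Lemma merit_ge k : merit_lim <= merit k.
Proof. exact: decreasing_ineq merit_decr merit_cv k. Qed.
Lemma merit_mono m n : (m <= n)%nat -> merit n <= merit m.
Proof. by move=> H; apply: decreasing_prop merit_decr _; exact/leP. Qed.

Definition gap k := merit k - merit_lim.
Lemma gap_pos k : 0 <= gap k.
Proof. by have := merit_ge k; rewrite /gap; lra. Qed.
Lemma gap_mono m n : (m <= n)%nat -> gap n <= gap m.
Proof. by move=> H; have := merit_mono m n H; rewrite /gap; lra. Qed.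
Lemma gap_small del : 0 < del -> exists K, forall k, (K <= k)%nat -> gap k < del.
Proof.
move=> Hd; have [K HK] := merit_cv del Hd; exists K => k Hk.
have := HK k ltac:(apply/leP; exact: Hk); rewrite /R_dist /gap => H.
by have := Rle_abs (merit k - merit_lim); lra.
Qed.

Lemma merit_window k m :
  merit (k + m)%nat <= merit k - amin * wsum (fun s => stepn s * stepn s) k m.
Proof.
elim: m => [|m IH]; first by rewrite wsum_0 addn0; lra.
by rewrite wsum_S addnS; have := merit_step (k + m)%nat; lra.
Qed.

Lemma x_window k m : bnorm (bsub (x (k + m)%nat) (x k)) <= wsum stepn k m.
Proof.
elim: m => [|m IH]; first by rewrite wsum_0 addn0 bnorm_self; lra.
rewrite wsum_S addnS; apply: Rle_trans (bnorm_tri _ (x (k + m)%nat) _) _.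
by rewrite /stepn in IH *; lra.
Qed.

(** ** Essential cyclicity controls the residual *)

Definition Ccyc := INR N * (CT + 1).
Lemma Ccyc_pos : 0 < Ccyc.
Proof. by rewrite /Ccyc; have := INRN_pos; have := CT_pos; nra. Qed.

(** Block i is updated at some step k + m + 1 <= k + T, where x_i becomes
    z^{k+m}_i; hence ||z^k_i - x^k_i|| <= ||z^k - z^{k+m}|| + d_{k+m}
    + ||x^{k+m} - x^k||, and T is Lipschitz. *)
Lemma res_window k : res k <= Ccyc * wsum stepn k T.
Proof.
rewrite /res; apply: Rle_trans (bnorm_le_sum _) _; rewrite /Ccyc Rmult_assoc.
apply: sumR_le_const => i; have [t [Ht Hsel]] := Hcyc k i.
have Et : (k + t = S (k + (t - 1)))%nat by lia.
rewrite Et in Hsel.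
have E : x (S (k + (t - 1))) i = z (k + (t - 1))%nat i
  by apply: functional_extensionality => j; exact: (proj1 (Hupd _ i j) Hsel).
set m := (t - 1)%nat in E Et.
have Dec : bsub (z k) (x k) i = add1 (add1 (sub1 (z k i) (z (k + m)%nat i))
     (sub1 (x (S (k + m)) i) (x (k + m)%nat i))) (sub1 (x (k + m)%nat i) (x k i))
  by apply: functional_extensionality => j; rewrite /add1 /sub1 /bsub E; ring.
rewrite Dec; apply: Rle_trans (norm1_add _ _) _.
apply: Rle_trans (Rplus_le_compat_r _ _ _ (norm1_add _ _)) _.
have A1 : norm1 (sub1 (z k i) (z (k + m)%nat i)) <= CT * wsum stepn k m.
  apply: Rle_trans (norm1_le_bnorm (bsub (z k) (z (k + m)%nat)) i) _.
  apply: Rle_trans (T_lip _ _ _ _ (Hz k) (Hz (k + m)%nat)) _.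
  by rewrite bnorm_opp; apply: Rmult_le_compat_l; [exact: Rlt_le CT_pos | exact: x_window].
have A2 : norm1 (sub1 (x (S (k + m)) i) (x (k + m)%nat i)) <= stepn (k + m)%nat
  by exact: (norm1_le_bnorm (bsub (x (S (k + m))) (x (k + m)%nat)) i).
have A3 : norm1 (sub1 (x (k + m)%nat i) (x k i)) <= wsum stepn k m
  by apply: Rle_trans (norm1_le_bnorm (bsub (x (k + m)%nat) (x k)) i) _; exact: x_window.
have W1 : wsum stepn k m + stepn (k + m)%nat <= wsum stepn k T
  by rewrite -wsum_S; apply: wsum_mono; [exact: stepn_pos | lia].
have W0 : 0 <= wsum stepn k m by apply: wsum_nonneg; exact: stepn_pos.
by have := CT_pos; have := stepn_pos (k + m)%nat; nra.
Qed.

Lemma INRT_pos : 0 < INR T.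
Proof. by apply: lt_0_INR; apply/ltP. Qed.

(** The decrease over a window, via (sum d)^2 <= T sum d^2. *)
Lemma gap_window k :
  amin / INR T * (wsum stepn k T * wsum stepn k T) <= gap k - gap (k + T)%nat.
Proof.
have W := merit_window k T; have C := sumR_CS (fun t : 'I_T => stepn (k + t)%nat).
change (sumR (fun t : 'I_T => stepn (k + t)%nat)) with (wsum stepn k T) in C.
change (sumR (fun i : 'I_T => stepn (k + i)%nat * stepn (k + i)%nat))
  with (wsum (fun s => stepn s * stepn s) k T) in C.
have HT := INRT_pos; have Ha := amin_pos; rewrite /gap.
suff : amin / INR T * (wsum stepn k T * wsum stepn k T)
    <= amin * wsum (fun s => stepn s * stepn s) k T by lra.
apply: (Rmult_le_reg_l (INR T)) => //.
have -> : INR T * (amin / INR T * (wsum stepn k T * wsum stepn k T)) =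
  amin * (wsum stepn k T * wsum stepn k T) by field; lra.
nra.
Qed.

Definition Kr := Ccyc * Ccyc * INR T / amin.
Lemma Kr_pos : 0 < Kr.
Proof.
rewrite /Kr; have H1 := Ccyc_pos; have H2 := INRT_pos; have H3 := amin_pos.
by apply: Rdiv_lt_0_compat => //; apply: Rmult_lt_0_compat => //; nra.
Qed.

Lemma res_sq k : res k * res k <= Kr * (gap k - gap (k + T)%nat).
Proof.
have R1 := res_window k; have W := gap_window k; have P := res_pos k.
have W0 : 0 <= wsum stepn k T by apply: wsum_nonneg; exact: stepn_pos.
have Hc := Ccyc_pos; have HT := INRT_pos; have Ha := amin_pos.
have H1 : res k * res k <= Ccyc * Ccyc * (wsum stepn k T * wsum stepn k T) by nra.
have -> : Kr * (gap k - gap (k + T)%nat) =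
    Ccyc * Ccyc * (INR T / amin * (gap k - gap (k + T)%nat))
  by rewrite /Kr; field; lra.
have H2 : wsum stepn k T * wsum stepn k T <= INR T / amin * (gap k - gap (k + T)%nat).
  apply: (Rmult_le_reg_l (amin / INR T)); first by apply: Rdiv_lt_0_compat.
  have -> : amin / INR T * (INR T / amin * (gap k - gap (k + T)%nat)) =
    gap k - gap (k + T)%nat by field; lra.
  lra.
by apply: Rle_trans H1 _; apply: Rmult_le_compat_l; [nra | exact: H2].
Qed.

Lemma res_small del : 0 < del -> exists K, forall k, (K <= k)%nat -> res k < del.
Proof.
move=> Hd; have HK := Kr_pos.
have [K HK'] := gap_small (del * del / Kr) ltac:(apply: Rdiv_lt_0_compat; nra).
exists K => k Hk; have := res_sq k; have := HK' k Hk.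
have := gap_pos (k + T)%nat; have := res_pos k => P1 P2 P3 P4.
have : res k * res k < del * del.
  have : Kr * (gap k - gap (k + T)%nat) < Kr * (del * del / Kr)
    by apply: Rmult_lt_compat_l => //; lra.
  have -> : Kr * (del * del / Kr) = del * del by field; lra.
  lra.
nra.
Qed.

Lemma res_le1 s : gap s <= / Kr -> res s <= 1.
Proof.
move=> H; have := res_sq s; have := gap_pos (s + T)%nat; have := Kr_pos.
have := res_pos s => P1 P2 P3 P4.
have : Kr * (gap s - gap (s + T)%nat) <= 1.
  have : Kr * gap s <= Kr * / Kr by apply: Rmult_le_compat_l; lra.
  by rewrite Rinv_r; [nra | lra].
nra.
Qed.

(** ** A cluster point, which is a critical point *)

Hypothesis Hcoer : coercive_ext domG Phi.

(** Coercivity: Phi(z^k) <= Psi_k <= Psi_0 keeps (z^k) bounded. *)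
Lemma z_bounded : exists B, forall k, bnorm (z k) <= B.
Proof.
have [r Hr] := Hcoer (merit 0 + 1); exists r => k.
apply: Rnot_lt_le => Hk; have := Hr (z k) (proj1 (Hz k)) (Rlt_le _ _ Hk).
have := merit_lower k; have := merit_mono 0 k (leq0n k); have := res_pos k.
by have := amin_pos; nra.
Qed.

Hypothesis HGlsc : lsc_ext domG G.
Variable xbar : bvec N nb.
Hypothesis Hclus : forall eps, 0 < eps -> forall K,
  exists k, (K <= k)%nat /\ bnorm (bsub (z k) xbar) < eps.

(** Since r_k -> 0, xbar is also a cluster point of (x^k), along the same indices. *)
Lemma cluster_x eps : 0 < eps -> forall K, exists k, (K <= k)%nat /\
  bnorm (bsub (z k) xbar) < eps /\ bnorm (bsub (x k) xbar) < eps /\ res k < eps.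
Proof.
move=> He K; have [K1 HK1] := res_small (eps / 2) ltac:(lra).
have [k [Hk Hzk]] := Hclus (eps / 2) ltac:(lra) (maxn K K1).
exists k; split; first lia.
have Hr := HK1 k ltac:(lia).
split; first lra; split; last lra.
apply: Rle_lt_trans (bnorm_tri _ (z k) _) _.
by rewrite bnorm_opp; rewrite /res in Hr; lra.
Qed.

Lemma near_cluster rho : 0 < rho -> exists k, bnorm (bsub (z k) xbar) < rho /\
  bnorm (bsub (fwd (x k)) (fwd xbar)) < rho /\ res k < rho.
Proof.
move=> Hrho; have HC := Cu_pos.
have HD : 0 < rho / (1 + Cu) by apply: Rdiv_lt_0_compat; lra.
have HDr : rho / (1 + Cu) * (1 + Cu) = rho by field; lra.
have HDle : rho / (1 + Cu) <= rho by nra.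
have [k [_ [Hzk [Hxk Hrk]]]] := cluster_x _ HD 0.
exists k; split; [lra | split; last lra].
apply: Rle_lt_trans (fwd_lip _ _) _; have := bnorm_pos (bsub (x k) xbar); nra.
Qed.

Lemma wdist_cont (a b : bvec N nb) eps : 0 < eps -> exists del, 0 < del /\
  forall a' b', bnorm (bsub a' a) < del -> bnorm (bsub b' b) < del ->
    Rabs (wnorm2 winv (bsub a' b') - wnorm2 winv (bsub a b)) < eps.
Proof.
move=> He; have [d [Hd H]] := wnorm2_cont (bsub a b) eps He.
exists (d / 2); split; first lra.
move=> a' b' Ha Hb; apply: H; apply: Rle_lt_trans (bsub_diff_le _ _ _ _) _; lra.
Qed.

Lemma xbar_dom : domG xbar.
Proof.
apply: NNPP => Hn.
set M := merit 0 - Fsum f xbar + 1.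
have [del [Hd HG]] := proj2 (HGlsc xbar) Hn M.
have [dF [HdF HF]] := F_cont xbar 1 Rlt_0_1.
have [k [_ [Hzk _]]] := cluster_x (Rmin del dF) (Rmin_pos _ _ Hd HdF) 0.
have H1 := HG (z k) (proj1 (Hz k)) (Rlt_le_trans _ _ _ Hzk (Rmin_l _ _)).
have H2 := HF (z k) (Rlt_le_trans _ _ _ Hzk (Rmin_r _ _)).
have := merit_lower k; have := merit_mono 0 k (leq0n k); have := res_pos k.
have := amin_pos; have := Rle_abs (Fsum f (z k) - Fsum f xbar).
have := Rle_abs (- (Fsum f (z k) - Fsum f xbar)); rewrite Rabs_Ropp.
by rewrite /Phi /M in H1 *; nra.
Qed.

(** xbar is a fixed point of T: pass to the limit in the prox minimality of
    z^k, using lower semicontinuity of G. *)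
Lemma xbar_fix : in_T domG G gf gamma xbar xbar.
Proof.
split; first exact: xbar_dom.
move=> y Hy; rewrite -/winv -/(fwd xbar); set ub := fwd xbar.
apply: le_eps => eps He.
have [d1 [Hd1 H1]] := wdist_cont xbar ub (eps / 4) ltac:(lra).
have [d2 [Hd2 H2]] := wdist_cont y ub (eps / 4) ltac:(lra).
have [d3 [Hd3 H3]] := proj1 (HGlsc xbar) xbar_dom (eps / 4) ltac:(lra).
have [k [Hzk [Huk _]]] := near_cluster (Rmin (Rmin d1 d2) d3)
  ltac:(apply: Rmin_pos; [apply: Rmin_pos|]; lra).
move: Hzk Huk => /Rmin_Rgt_l [/Rmin_Rgt_l [Hz1 Hz2] Hz3] /Rmin_Rgt_l [/Rmin_Rgt_l [Hu1 Hu2] _].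
have Hm := proj2 (in_T_prox _ _ (Hz k)) y Hy.
have A3 := H3 (z k) (proj1 (Hz k)) Hz3.
have Hyy : bnorm (bsub y y) < d2 by rewrite bnorm_self.
move: (H1 _ _ Hz1 Hu1) (H2 _ _ Hyy Hu2)
  => /Rabs_def2 [C1 C1'] /Rabs_def2 [C2 C2'].
lra.
Qed.

Lemma xbar_subdiff : regular_subdiff domG Phi xbar bzero.
Proof.
have -> : (bzero : bvec N nb) = subgrad_at xbar xbar
  by apply: bvec_ext => i j; rewrite /subgrad_at /bzero; ring.
exact: subgrad xbar xbar xbar_fix.
Qed.

(** Phi(xbar) = lim Psi_k.  The lower bound uses lower semicontinuity of G. *)
Lemma Phi_xbar_le : Phi xbar <= merit_lim.
Proof.
apply: le_eps => eps He; have He3 : 0 < eps / 3 by lra.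
have [d3 [Hd3 H3]] := proj1 (HGlsc xbar) xbar_dom (eps / 3) He3.
have [dF [HdF HF]] := F_cont xbar (eps / 3) He3.
have [K HK] := gap_small (eps / 3) He3.
have [k [Hk [Hzk _]]] := cluster_x (Rmin d3 dF) (Rmin_pos _ _ Hd3 HdF) K.
have A3 := H3 (z k) (proj1 (Hz k)) (Rlt_le_trans _ _ _ Hzk (Rmin_l _ _)).
have AF := HF (z k) (Rlt_le_trans _ _ _ Hzk (Rmin_r _ _)).
have B1 := HK k Hk; have B2 := merit_lower k.
have B3 : 0 <= amin * (res k * res k)
  by apply: Rmult_le_pos; [exact: Rlt_le amin_pos | have := res_pos k; nra].
have B4 := Rle_abs (- (Fsum f (z k) - Fsum f xbar)); rewrite Rabs_Ropp in B4.
by rewrite /Phi /gap in B1 B2 *; lra.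
Qed.

Lemma sq_small A e r : 0 < A -> 0 < e -> 0 <= r -> r < sqrt (e / (A + 1)) -> A * (r * r) <= e.
Proof.
move=> HA He Hr Hrs.
have H : r * r <= e / (A + 1).
  rewrite -(sqrt_sqrt (e / (A + 1))); last by apply: Rlt_le; apply: Rdiv_lt_0_compat; lra.
  by apply: Rmult_le_compat; lra.
have : A * (e / (A + 1)) <= e.
  have -> : A * (e / (A + 1)) = e * (A / (A + 1)) by field; lra.
  have : A / (A + 1) <= 1
    by apply: (Rmult_le_reg_r (A + 1)); [lra | rewrite /Rdiv Rmult_assoc Rinv_l; lra].
  nra.
by have := Rmult_le_compat_l A _ _ (Rlt_le _ _ HA) H; lra.
Qed.

(** The upper bound compares z^k with xbar in the prox minimality of z^k. *)
Lemma merit_lim_le : merit_lim <= Phi xbar.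
Proof.
apply: le_eps => eps0 He0; set eps := eps0 / 3; have He : 0 < eps by rewrite /eps; lra.
set ub := fwd xbar.
have [d1 [Hd1 H1]] := wdist_cont xbar ub eps He.
have [dF [HdF HF]] := F_cont xbar eps He.
have Hs : 0 < sqrt (eps / (Amax + 1))
  by apply: sqrt_lt_R0; apply: Rdiv_lt_0_compat; have := Amax_pos; lra.
have [k [Hzk [Huk Hrk]]] := near_cluster (Rmin (Rmin d1 dF) (sqrt (eps / (Amax + 1))))
  ltac:(apply: Rmin_pos; [apply: Rmin_pos|]; lra).
move: Hzk Huk Hrk => /Rmin_Rgt_l [/Rmin_Rgt_l [Hz1 HzF] _] /Rmin_Rgt_l [/Rmin_Rgt_l [Hu1 _] _]
  /Rmin_Rgt_l [_ Hrs].
have Hm := proj2 (in_T_prox _ _ (Hz k)) xbar xbar_dom.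
have Hxx : bnorm (bsub xbar xbar) < d1 by rewrite bnorm_self.
move: (H1 _ _ Hz1 Hu1) (H1 _ _ Hxx Hu1)
  => /Rabs_def2 [C1 C1'] /Rabs_def2 [C2 C2'].
have AF := HF (z k) HzF.
have Hrr := sq_small _ _ _ Amax_pos He (res_pos k) Hrs.
have := merit_upper k; have := merit_ge k.
have := Rle_abs (Fsum f (z k) - Fsum f xbar).
have E3 : eps0 = 3 * eps by rewrite /eps; field.
by rewrite /Phi; clearbody eps; lra.
Qed.

Lemma merit_lim_eq : merit_lim = Phi xbar.
Proof. by have := Phi_xbar_le; have := merit_lim_le; lra. Qed.

(** ** The KL inequality along the iterates *)

Variable theta : R.
Hypothesis Htheta : 0 < theta < 1.
Hypothesis HKL : KL_exp domG Phi theta.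

Definition thetam := Rmax theta (/ 2).
Definition alp := 1 - thetam.

Lemma thetam_range : / 2 <= thetam < 1 /\ theta <= thetam.
Proof.
rewrite /thetam; have := Rmax_l theta (/ 2); have := Rmax_r theta (/ 2).
by move=> *; split; [split; [lra | apply: Rmax_lub_lt; lra] | lra].
Qed.

Lemma alp_range : 0 < alp <= 1.
Proof. by have := thetam_range; rewrite /alp; lra. Qed.

(** xbar is critical, so the KL property holds at xbar. *)
Lemma KL_xbar : exists eK etaK rhoK, 0 < eK /\ 0 < etaK /\ 0 < rhoK /\
  forall w, bnorm (bsub w xbar) < eK -> domG w ->
    Phi xbar < Phi w -> Phi w < Phi xbar + etaK ->
    forall v, limiting_subdiff domG Phi w v ->
      1 <= rhoK * (1 - theta) * Rpower (Phi w - Phi xbar) (- theta) * bnorm v.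
Proof. by have [_ H] := HKL xbar (ex_intro _ bzero (regular_limiting _ _ _ _ xbar_subdiff)). Qed.

Section KLlocal.
Variables eK etaK rhoK : R.
Hypothesis HeK : 0 < eK.
Hypothesis HetaK : 0 < etaK.
Hypothesis HrhoK : 0 < rhoK.
Hypothesis HKLx : forall w, bnorm (bsub w xbar) < eK -> domG w ->
  Phi xbar < Phi w -> Phi w < Phi xbar + etaK ->
  forall v, limiting_subdiff domG Phi w v ->
    1 <= rhoK * (1 - theta) * Rpower (Phi w - Phi xbar) (- theta) * bnorm v.

Definition cK := rhoK * (1 - theta) * Cv.
Definition K0 := Amax + Rpower cK (/ theta).
Definition K1 := Rpower K0 thetam.

Lemma cK_pos : 0 < cK.
Proof.
rewrite /cK /Cv; have := wmax_pos; have := Lmax_pos.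
by move=> *; apply: Rmult_lt_0_compat; [nra | lra].
Qed.
Lemma K0_pos : 0 < K0.
Proof. by rewrite /K0; have := Amax_pos; have := Rpow_pos cK (/ theta); lra. Qed.
Lemma K1_pos : 0 < K1.
Proof. exact: Rpow_pos. Qed.

Lemma gap_eq s : gap s = merit s - Phi xbar.
Proof. by rewrite /gap merit_lim_eq. Qed.

(** KL at z^s, applied to the explicit subgradient of Phi at z^s:
    (Phi(z^s) - Phi(xbar))^theta <= cK r_s. *)
Lemma KL_iterate s : bnorm (bsub (z s) xbar) < eK -> gap s < etaK ->
  Phi xbar < Phi (z s) -> Rpower (Phi (z s) - Phi xbar) theta <= cK * res s.
Proof.
move=> Hzs Hes Hd0; set d := Phi (z s) - Phi xbar.
have Hd1 : Phi (z s) < Phi xbar + etaK.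
  have := merit_lower s; have := res_pos s; have := amin_pos.
  by rewrite gap_eq in Hes; nra.
have HK := HKLx (z s) Hzs (proj1 (Hz s)) Hd0 Hd1 (subgrad_at (x s) (z s))
  (regular_limiting _ _ _ _ (subgrad _ _ (Hz s))).
rewrite -/d Rpower_Ropp in HK.
have Hv := subgrad_bound (x s) (z s).
have Hp : 0 < Rpower d theta := Rpow_pos _ _.
have Hc : 0 < rhoK * (1 - theta) by apply: Rmult_lt_0_compat; lra.
have H2 : Rpower d theta <= rhoK * (1 - theta) * bnorm (subgrad_at (x s) (z s)).
  apply: (Rmult_le_reg_r (/ Rpower d theta)); first exact: Rinv_0_lt_compat.
  rewrite Rinv_r; last lra.
  by apply: Rle_trans HK _; right; ring.
apply: Rle_trans H2 _; rewrite /cK /res.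
by have := Rmult_le_compat_l (rhoK * (1 - theta)) _ _ (Rlt_le _ _ Hc) Hv; lra.
Qed.

Lemma value_bound s : bnorm (bsub (z s) xbar) < eK -> gap s < etaK ->
  Phi (z s) - Phi xbar <= Rpower cK (/ theta) * pw (res s) (/ theta).
Proof.
move=> Hzs Hes.
have HR : 0 <= Rpower cK (/ theta) * pw (res s) (/ theta)
  by apply: Rmult_le_pos; [exact: Rlt_le (Rpow_pos _ _) | exact: pw_nneg].
destruct (Rle_lt_dec (Phi (z s) - Phi xbar) 0) as [Hd|Hd]; first lra.
have Hdt := KL_iterate s Hzs Hes ltac:(lra).
have Hp := Rpow_pos (Phi (z s) - Phi xbar) theta.
have Hr : 0 < res s by have := cK_pos; have := res_pos s; nra.
have Hit : 0 < / theta by apply: Rinv_0_lt_compat; lra.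
have := Rle_Rpower_l _ _ (/ theta) (Rlt_le _ _ Hit) (conj Hp Hdt).
have E : Rpower cK (/ theta) * Rpower (res s) (/ theta) = Rpower (cK * res s) (/ theta)
  by apply: Rpower_mult_distr; [exact: cK_pos | lra].
by rewrite Rpow_inv ?pw_pos ?E //; lra.
Qed.

Lemma KL_local s : bnorm (bsub (z s) xbar) < eK -> gap s < etaK -> res s <= 1 -> 0 < gap s ->
  Rpower (gap s) thetam <= K1 * res s.
Proof.
move=> Hzs Hes Hr1 He.
have [[Ht1 Ht2] Ht3] := thetam_range.
have Hup : gap s <= Rpower cK (/ theta) * pw (res s) (/ theta) + Amax * (res s * res s)
  by have := merit_upper s; have := value_bound s Hzs Hes; rewrite gap_eq; lra.
have Hr : 0 < res s.
  destruct (Req_dec (res s) 0) as [E|E]; last by have := res_pos s; lra.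
  by rewrite E pw_nonpos in Hup; lra.
rewrite pw_pos // in Hup.
have Hit' : 0 < / thetam by apply: Rinv_0_lt_compat; lra.
have Hr1' : 0 < res s <= 1 by split.
have P1 : res s * res s <= Rpower (res s) (/ thetam).
  rewrite Rpow_2 //; apply: Rpow_dec_exp => //.
  by rewrite -(Rinv_inv 2); apply: Rinv_le_contravar; lra.
have P2 : Rpower (res s) (/ theta) <= Rpower (res s) (/ thetam)
  by apply: Rpow_dec_exp => //; apply: Rinv_le_contravar; lra.
have HcK := Rpow_pos cK (/ theta); have HA := Amax_pos.
have Hrp := Rpow_pos (res s) (/ thetam).
have Hbound : gap s <= K0 * Rpower (res s) (/ thetam).
  have := Rmult_le_compat_l _ _ _ (Rlt_le _ _ HcK) P2.
  have := Rmult_le_compat_l _ _ _ (Rlt_le _ _ HA) P1.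
  by rewrite /K0; lra.
have := Rle_Rpower_l (gap s) (K0 * Rpower (res s) (/ thetam)) thetam ltac:(lra) (conj He Hbound).
rewrite -Rpower_mult_distr //; last exact: K0_pos.
by rewrite Rpower_mult Rinv_l ?Rpower_1 //; lra.
Qed.

(** ** Finite length *)

Definition Kf := INR T / amin * (K1 * Ccyc) / alp.

Lemma Kf_pos : 0 < Kf.
Proof.
rewrite /Kf; have := K1_pos; have := Ccyc_pos; have := INRT_pos; have := amin_pos.
have [Ha _] := alp_range; move=> *.
by apply: Rdiv_lt_0_compat => //; apply: Rmult_lt_0_compat; [apply: Rdiv_lt_0_compat | nra].
Qed.

Lemma window_length s : bnorm (bsub (z s) xbar) < eK -> gap s < etaK -> gap s <= / Kr ->
  wsum stepn s T <= Kf * (pw (gap s) alp - pw (gap (s + T)%nat) alp).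
Proof.
move=> Hzs Hes HeKr.
have HT := INRT_pos; have Ham := amin_pos.
apply: concave_length_step.
- exact: alp_range.
- exact: Rdiv_lt_0_compat.
- by have := K1_pos; have := Ccyc_pos; nra.
- by apply: wsum_nonneg; exact: stepn_pos.
- by split; [exact: gap_pos | apply: gap_mono; exact: leq_addr].
- have W := gap_window s.
  apply: (Rmult_le_reg_l (amin / INR T)); first exact: Rdiv_lt_0_compat.
  rewrite (_ : amin / INR T * (INR T / amin * (gap s - gap (s + T)%nat)) =
    gap s - gap (s + T)%nat) //.
  by field; lra.
- move=> He0; have -> : 1 - alp = thetam by rewrite /alp; ring.
  apply: Rle_trans (KL_local s Hzs Hes (res_le1 s HeKr) He0) _.
  by rewrite Rmult_assoc; apply: Rmult_le_compat_l; [exact: Rlt_le K1_pos | exact: res_window].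
Qed.

Lemma length_bound k0 m : (forall s, (k0 <= s)%nat -> gap s < etaK /\ gap s <= / Kr) ->
  (forall t, (t < m)%nat -> bnorm (bsub (z (k0 + t)%nat) xbar) < eK) ->
  wsum stepn k0 m <= Kf * INR T * pw (gap k0) alp.
Proof.
move=> Hee Hm; have [Ha _] := alp_range.
apply: (Rle_trans _ (wsum (fun s => wsum stepn s T) k0 m)).
  apply: wsum_le => s; have := wsum_mono stepn s 1 T stepn_pos HT1.
  by rewrite wsum_S wsum_0 addn0; lra.
apply: (Rle_trans _ (wsum (fun s => Kf * (pw (gap s) alp - pw (gap (s + T)%nat) alp)) k0 m)).
  apply: wsum_le_in => t Ht; have [H1 H2] := Hee (k0 + t)%nat (leq_addr _ _).
  exact: window_length (Hm t Ht) H1 H2.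
rewrite /wsum sumR_scal Rmult_assoc; apply: Rmult_le_compat_l; first exact: Rlt_le Kf_pos.
apply: (telescope_le (fun s => pw (gap s) alp)); first by move=> s0; exact: pw_nneg.
by move=> a b Hab; apply: pw_mono; [lra | exact: gap_mono].
Qed.

(** Trapping: from a suitable k0 on, the iterates never leave the KL
    neighbourhood of xbar, since their length stays small. *)
Lemma trap : exists k0,
  (forall s, (k0 <= s)%nat -> bnorm (bsub (z s) xbar) < eK) /\
  (forall s, (k0 <= s)%nat -> gap s < etaK /\ gap s <= / Kr) /\
  (forall m, wsum stepn k0 m <= Kf * INR T * pw (gap k0) alp).
Proof.
have [Ha _] := alp_range.
set c := CT * Kf * INR T + 1.
have Hc : 0 < c.
  rewrite /c; have := Rmult_lt_0_compat _ _ (Rmult_lt_0_compat _ _ CT_pos Kf_pos) INRT_pos.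
  lra.
have [del [Hdel Hpw]] := pw_small alp Ha (eK / (2 * c)) ltac:(apply: Rdiv_lt_0_compat; lra).
have HKr := Kr_pos.
have Hmu : 0 < Rmin (Rmin etaK (/ Kr)) del
  by apply: Rmin_pos; [apply: Rmin_pos; [lra | exact: Rinv_0_lt_compat] | lra].
have [K HK] := gap_small _ Hmu.
have [k0 [Hk0 [Hz0 _]]] := cluster_x (eK / 2) ltac:(lra) K.
have Hee : forall s, (k0 <= s)%nat -> gap s < etaK /\ gap s <= / Kr.
  move=> s Hs; move: (HK s ltac:(lia)) => /Rmin_Rgt_l [/Rmin_Rgt_l [H1 H2] _]; lra.
have Hpw0 : pw (gap k0) alp < eK / (2 * c)
  by apply: Hpw; move: (HK k0 Hk0) => /Rmin_Rgt_l [_ H]; lra.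
have Hpos := pw_nneg (gap k0) alp.
have Tr : forall m t, (t <= m)%nat -> bnorm (bsub (z (k0 + t)%nat) xbar) < eK.
  elim => [|m IH] t Ht; first by rewrite (_ : t = 0%nat) ?addn0; [lra | lia].
  case: (ltngtP t m.+1) => Htm; [by apply: IH; lia | lia | rewrite Htm].
  have B := length_bound k0 m.+1 Hee (fun t' Ht' => IH t' ltac:(lia)).
  apply: Rle_lt_trans (bnorm_tri _ (z k0) _) _.
  have L1 := T_lip _ _ _ _ (Hz (k0 + m.+1)%nat) (Hz k0).
  have L2 := x_window k0 m.+1; have HCT := CT_pos.
  have : CT * bnorm (bsub (x (k0 + m.+1)%nat) (x k0)) <= CT * (Kf * INR T * pw (gap k0) alp)
    by apply: Rmult_le_compat_l; lra.
  have : c * (eK / (2 * c)) = eK / 2 by field; lra.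
  have : CT * (Kf * INR T * pw (gap k0) alp) <= c * pw (gap k0) alp by rewrite /c; lra.
  have := Rmult_lt_compat_l c _ _ Hc Hpw0.
  lra.
exists k0; split; [|split; first exact: Hee].
- by move=> s Hs; have := Tr (s - k0)%nat (s - k0)%nat (leqnn _); rewrite subnKC.
- by move=> m; apply: length_bound => // t1 Ht1; exact: (Tr t1 t1 (leqnn t1)).
Qed.

(** Finite length makes (x^k) Cauchy; its limit is the cluster point xbar. *)
Lemma x_conv : bconv x xbar.
Proof.
have [k0 [_ [_ SB]]] := trap.
set P := fun m => wsum stepn k0 m.
have Pg : Un_growing P by move=> m; rewrite /P wsum_S; have := stepn_pos (k0 + m)%nat; lra.
have Pub : has_ub P by exists (Kf * INR T * pw (gap k0) alp) => r [m ->]; exact: SB.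
have [l Hl] := growing_cv P Pg Pub.
have Pl := growing_ineq P l Pg Hl.
move=> eps He; have [M HM] := Hl (eps / 2) ltac:(lra).
exists (k0 + M)%nat => k Hk.
have [k' [Hk' [_ [Hxk' _]]]] := cluster_x (eps / 2) ltac:(lra) k.
apply: Rle_lt_trans (bnorm_tri _ (x k') _) _.
have W := wsum_split stepn k0 (k - k0) (k' - k).
have E1 : (k - k0 + (k' - k) = k' - k0)%nat by lia.
have E2 : (k0 + (k - k0) = k)%nat by lia.
have E3 : (k + (k' - k) = k')%nat by lia.
rewrite E1 E2 in W.
have Xw := x_window k (k' - k); rewrite E3 in Xw.
rewrite bnorm_opp in Xw.
have H1 := Pl (k' - k0)%nat; have H2 := HM (k - k0)%nat ltac:(apply/leP; lia).
move: H2; rewrite /R_dist => /Rabs_def2 [H2 H2'].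
by rewrite /P in H1 H2 H2' *; clear P Pg Pub Pl Hl HM; lra.
Qed.

Lemma z_conv : bconv z xbar.
Proof.
move=> eps He; have [K1' HK1] := x_conv (eps / 2) ltac:(lra).
have [K2 HK2] := res_small (eps / 2) ltac:(lra).
exists (maxn K1' K2) => k Hk; apply: Rle_lt_trans (bnorm_tri _ (x k) _) _.
by have := HK1 k ltac:(lia); have := HK2 k ltac:(lia); rewrite /res; lra.
Qed.

(** ** R-linear rates when theta <= 1/2 *)

(** With theta' = 1/2 the KL inequality e_s <= K1^2 r_s^2 and the window
    decrease make the gaps contract by a fixed factor over every window. *)
Lemma gap_contract : theta <= / 2 -> exists k0 q, 0 < q < 1 /\
  forall s, (k0 <= s)%nat -> gap (s + T)%nat <= q * gap s.
Proof.
move=> Hth; have Eth : thetam = / 2 by rewrite /thetam Rmax_right.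
have [k0 [Hzt [Hee _]]] := trap.
have HK1 := K1_pos; have HC := Ccyc_pos; have HT := INRT_pos; have Ham := amin_pos.
set Q := K1 * Ccyc * (K1 * Ccyc) * INR T / amin.
have HKC := Rmult_lt_0_compat _ _ HK1 HC.
have HQ : 0 < Q by apply: Rdiv_lt_0_compat => //; apply: Rmult_lt_0_compat => //; exact: Rmult_lt_0_compat.
exists k0, (Rmax (1 - / Q) (/ 2)); split.
  split; first by have := Rmax_r (1 - / Q) (/ 2); lra.
  by apply: Rmax_lub_lt; [have := Rinv_0_lt_compat _ HQ; lra | lra].
move=> s Hs; have [H1 H2] := Hee s Hs.
have Hm : gap (s + T)%nat <= gap s by apply: gap_mono; exact: leq_addr.
have He0 := gap_pos (s + T)%nat; have Hq := Rmax_l (1 - / Q) (/ 2).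
destruct (Req_dec (gap s) 0) as [E|E]; first by rewrite E in Hm *; lra.
have Hep : 0 < gap s by have := gap_pos s; lra.
have KL := KL_local s (Hzt s Hs) H1 (res_le1 s H2) Hep.
rewrite Eth Rpower_sqrt // in KL.
have Rw := res_window s; have W := gap_window s.
set S := wsum stepn s T in Rw W.
have HS : 0 <= S by apply: wsum_nonneg; exact: stepn_pos.
have A1 : sqrt (gap s) <= K1 * Ccyc * S
  by apply: Rle_trans KL _; rewrite Rmult_assoc; apply: Rmult_le_compat_l; lra.
have A2 : gap s <= (K1 * Ccyc * S) * (K1 * Ccyc * S).
  rewrite -{1}(sqrt_sqrt (gap s)); last lra.
  by have := sqrt_pos (gap s); move=> P0; apply: Rmult_le_compat; lra.
have A3 : gap s <= Q * (gap s - gap (s + T)%nat).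
  apply: Rle_trans A2 _.
  have -> : K1 * Ccyc * S * (K1 * Ccyc * S) = Q * (amin / INR T * (S * S))
    by rewrite /Q; field; lra.
  by apply: Rmult_le_compat_l; [exact: Rlt_le | exact: W].
have : gap (s + T)%nat <= (1 - / Q) * gap s.
  have : gap s / Q <= gap s - gap (s + T)%nat.
    apply: (Rmult_le_reg_l Q) => //.
    by rewrite (_ : Q * (gap s / Q) = gap s); [lra | field; lra].
  by rewrite (_ : (1 - / Q) * gap s = gap s - gap s / Q); [lra | field; lra].
nra.
Qed.

(** The steps d_s decay R-linearly, since amin d_s^2 <= e_s. *)
Lemma stepn_rate : theta <= / 2 ->
  exists c rho, 0 <= c /\ 0 < rho < 1 /\ forall s, stepn s <= c * rho ^ s.
Proof.
move=> Hth; have [k0 [q [Hq Hcontr]]] := gap_contract Hth.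
have [C [r [HC [Hr Hgeo]]]] := windows_geometric gap T k0 q HT1 Hq gap_pos gap_mono Hcontr.
have Ham := amin_pos; have Hsa : 0 < sqrt amin := sqrt_lt_R0 _ Ham.
exists (sqrt C / sqrt amin), (sqrt r); split; last split.
- by apply: Rmult_le_pos; [exact: sqrt_pos | apply: Rlt_le; apply: Rinv_0_lt_compat].
- split; first by apply: sqrt_lt_R0; lra.
  by rewrite -sqrt_1; apply: sqrt_lt_1_alt; lra.
move=> s; have St := merit_step s; have Hd := stepn_pos s.
have H : stepn s * stepn s <= C * r ^ s / amin.
  apply: (Rmult_le_reg_l amin) => //.
  have -> : amin * (C * r ^ s / amin) = C * r ^ s by field; lra.
  by have := Hgeo s; have := gap_pos (S s); rewrite /gap in St *; lra.
rewrite -(sqrt_square (stepn s)) //; apply: Rle_trans (sqrt_le_1_alt _ _ H) _.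
have Hp : 0 <= r ^ s by apply: pow_le; lra.
rewrite sqrt_div_alt // sqrt_mult // sqrt_pow; last lra.
by right; field; lra.
Qed.

(** R-linear convergence of the residuals, of (x^k) (by summing the tail of
    the geometric path) and of (z^k). *)
Lemma linear_rates : theta <= / 2 ->
  Rlinear_R (fun k => bnorm (bsub (z k) (x k))) 0 /\ Rlinear_b x xbar /\ Rlinear_b z xbar.
Proof.
move=> Hth; have [c [rho [Hc [Hrho Hd]]]] := stepn_rate Hth.
have HC := Ccyc_pos; have HT := INRT_pos.
have Rr : forall s, res s <= Ccyc * INR T * c * rho ^ s.
  move=> s; have R0 := res_window s.
  have W : wsum stepn s T <= INR T * (c * rho ^ s).
    rewrite /wsum; apply: sumR_le_const => t; apply: Rle_trans (Hd _) _.
    by apply: Rmult_le_compat_l => //; apply: pow_dec; [lra | exact: leq_addr].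
  by have := Rmult_le_compat_l Ccyc _ _ (Rlt_le _ _ HC) W; lra.
have Xb : forall s, bnorm (bsub (x s) xbar) <= c * rho ^ s / (1 - rho).
  move=> s; apply: le_eps => eps He; have [K HK] := x_conv eps He.
  apply: Rle_trans (bnorm_tri _ (x (s + K)%nat) _) _.
  have := HK (s + K)%nat (leq_addl _ _).
  have Xw := x_window s K; rewrite bnorm_opp in Xw.
  have := wsum_le stepn (fun t => c * rho ^ t) s K Hd.
  by have := geom_wsum c rho s K Hc ltac:(lra); lra.
have Hr1 : 0 < 1 - rho by lra.
have Ex : forall k, c / (1 - rho) * rho ^ k = c * rho ^ k / (1 - rho)
  by move=> k; field; lra.
split; [|split].
- exists (Ccyc * INR T * c), rho; split => // k.
  by rewrite Rminus_0_r Rabs_pos_eq; [exact: Rr | exact: res_pos].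
- by exists (c / (1 - rho)), rho; split => // k; rewrite Ex; exact: Xb.
- exists (Ccyc * INR T * c + c / (1 - rho)), rho; split => // k.
  apply: Rle_trans (bnorm_tri _ (x k) _) _.
  by have := Rr k; have := Xb k; have := Ex k; rewrite /res; lra.
Qed.

End KLlocal.

Lemma converge_to_cluster : bconv x xbar /\ bconv z xbar /\
  regular_subdiff domG Phi xbar bzero /\
  (theta <= / 2 ->
     Rlinear_R (fun k => bnorm (bsub (z k) (x k))) 0 /\
     Rlinear_b x xbar /\ Rlinear_b z xbar).
Proof.
have [eK [etaK [rhoK [H1 [H2 [H3 H4]]]]]] := KL_xbar.
split; first exact: (x_conv eK etaK rhoK H1 H2 H3 H4).
split; first exact: (z_conv eK etaK rhoK H1 H2 H3 H4).
split; first exact: xbar_subdiff.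
exact: (linear_rates eK etaK rhoK H1 H2 H3 H4).
Qed.

End Problem.

Theorem theorem2p11
  (N : nat) (HN : (0 < N)%nat) (nb : 'I_N -> nat)
  (f : forall i : 'I_N, blk (nb i) -> R)
  (gf : forall i : 'I_N, blk (nb i) -> blk (nb i))
  (L : 'I_N -> R)
  (Hgrad : forall i, is_gradient (f i) (gf i))
  (HL : forall i, 0 <= L i)
  (HLip : forall i, lipschitz_grad (gf i) (L i))
  (domG : bvec N nb -> Prop) (G : bvec N nb -> R)
  (HGproper : proper_ext domG) (HGlsc : lsc_ext domG G)
  (HGconvex : convex_ext domG G)
  (Hargmin : argmin_nonempty domG (fun x => Fsum f x + G x))
  (gamma : 'I_N -> R)
  (Hgamma : forall i, 0 < gamma i /\ gamma i * L i < INR N)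
  (x z : nat -> bvec N nb) (sel : nat -> 'I_N -> Prop)
  (Hz : forall k, in_T domG G gf gamma (x k) (z k))
  (Hupd : forall k i j,
      (sel (S k) i -> x (S k) i j = z k i j) /\
      (~ sel (S k) i -> x (S k) i j = x k i j))
  (Hcyc : exists T, (1 <= T)%nat /\
      forall k i, exists t, (1 <= t <= T)%nat /\ sel (k + t)%nat i)
  (Hcoer : coercive_ext domG (fun x => Fsum f x + G x))
  (theta : R) (Htheta : 0 < theta < 1)
  (HKL : KL_exp domG (fun x => Fsum f x + G x) theta) :
  exists xstar : bvec N nb,
    bconv x xstar /\ bconv z xstar /\
    regular_subdiff domG (fun x => Fsum f x + G x) xstar bzero /\
    (theta <= / 2 ->
       Rlinear_R (fun k => bnorm (bsub (z k) (x k))) 0 /\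
       Rlinear_b x xstar /\ Rlinear_b z xstar).
Proof.
have [T [HT1 HcycT]] := Hcyc.
have [B HB] := z_bounded N HN nb f gf L Hgrad HL HLip domG G gamma Hgamma x z sel Hz Hupd Hcoer.
have [xbar Hclus] := BW_bvec z B HB.
exists xbar.
exact: (converge_to_cluster N HN nb f gf L Hgrad HL HLip domG G HGconvex gamma Hgamma
  x z sel Hz Hupd T HT1 HcycT Hargmin HGlsc xbar Hclus theta Htheta HKL).
Qed.
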